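(* (a) For all $t>0$, $|E(t)|<M(t)$. (b) There exist $t_0,t_1$ with $0<t_1<t_0<1$ such that $M(t)<\operatorname{arccot}t$ for all $t>t_0$ and $|E(t)|<\operatorname{arccot}t$ for all $t>t_1$. (c) For all $t\geq0$, $|\mathrm{si}(t)|\leq\operatorname{arccot}t$, with equality only for $t=0$.
   Context: For $t>0$, $E(t)=\int_0^\infty \frac{e^{iu}}{u+t}\,du$ (improper integral) and $M(t)=\int_0^\infty \frac{e^{-tu}}{\sqrt{u^2+1}}\,du$. The complementary sine integral is $\mathrm{si}(t)=-\int_t^\infty\frac{\sin u}{u}\,du$ for $t\ge0$ (so $\mathrm{si}(0)=-\pi/2$). *)

From Stdlib Require Import Reals.
From Coquelicot Require Import Coquelicot.
Open Scope R_scope.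

Definition int_to_infty (f : R -> R) (a : R) : R :=
  RInt_gen f (at_point a) (Rbar_locally p_infty).

(* E(t) = int_0^oo e^{iu}/(u+t) du, computed componentwise:
   Re E = int cos u/(u+t), Im E = int sin u/(u+t). *)
Definition E (t : R) : C :=
  (int_to_infty (fun u => cos u / (u + t)) 0,
   int_to_infty (fun u => sin u / (u + t)) 0).

Definition M (t : R) : R :=
  int_to_infty (fun u => exp (- (t * u)) / sqrt (u ^ 2 + 1)) 0.

Definition si (t : R) : R :=
  - int_to_infty (fun u => sin u / u) t.

Definition arccot (t : R) : R := PI / 2 - atan t.

From Stdlib Require Import Reals Lra Psatz Lia List FunctionalExtensionality.
From Coquelicot Require Import Coquelicot.
Open Scope R_scope.
Import ListNotations.

(* Writing 1/(u + t) as the integral of exp(-(u + t) x) over x > 0 and integrating in u first,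
   E(t) = int_0^oo exp(-t x) (x + i) / (1 + x^2) dx = g(t) + i f(t), where f and g are the Laplace
   transforms of 1/(1 + x^2) and x/(1 + x^2).  Instead of exchanging integrals we use
   f' = -g and g' = f - 1/t, which make sin u f(u+t) - cos u g(u+t) and
   -(sin u g(u+t) + cos u f(u+t)) primitives of cos u/(u+t) and sin u/(u+t); the latter also gives
   si(t) = -(sin t g(t) + cos t f(t)).
   (a) |(x + i)/(1 + x^2)| = 1/sqrt(1 + x^2), so |E(t)| <= M(t) is the triangle inequality, and it
   is strict because the argument of x + i is not constant.
   (b) For t >= 4 a polynomial majorant of 1/sqrt(1 + u^2) gives M(t) <= 1/t - 1/t^3 + 9/t^5, below
   a Taylor lower bound for arctan(1/t).  On [9/10, 4], M is convex and arccot lies above its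
   tangents, so M < arccot follows from upper bounds on M at ten points.  These come from chords
   of the convex function w |-> 1/sqrt(1 + w) in w = u^2, which integrate against exp(-t u) in
   closed form.  The bound on |E| then follows from (a).
   (c) For t >= 9/10, |si(t)| <= |E(t)| by Cauchy-Schwarz.  For smaller t,
   |si(t)| = S - int_0^t sin u/u du where S <= pi/2 is the Dirichlet integral, and
   sin u/u >= 1 - u^2/6 beats a Taylor upper bound for arctan t. *)

Lemma continuous_of_ex_derive (f : R -> R) x : ex_derive f x -> continuous f x.
Proof. intros H. now apply (ex_derive_continuous (K:=R_AbsRing) (V:=R_NormedModule)). Qed.

Lemma ex_RInt_of_continuous (f : R -> R) a b : (forall x, continuous f x) -> ex_RInt f a b.
Proof. intros H. apply (ex_RInt_continuous (V:=R_CompleteNormedModule)). intros; apply H. Qed.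

Lemma is_RInt_of_antiderivative (F f : R -> R) a b :
  (forall x, is_derive F x (f x)) -> (forall x, continuous f x) -> is_RInt f a b (F b - F a).
Proof. intros HF Hf. apply (is_RInt_derive (V:=R_CompleteNormedModule)); auto. Qed.

Lemma RInt_le_extend (f : R -> R) a b c : a <= b <= c -> (forall x, continuous f x) ->
  (forall x, b <= x <= c -> 0 <= f x) -> RInt f a b <= RInt f a c.
Proof.
  intros Hb Hc Hp. rewrite <- (RInt_Chasles f a b c) by (apply ex_RInt_of_continuous; auto).
  assert (0 <= RInt f b c)
    by (apply RInt_ge_0; [lra|apply ex_RInt_of_continuous; auto|intros; apply Hp; lra]).
  change (plus (RInt f a b) (RInt f b c)) with (RInt f a b + RInt f b c). lra.
Qed.

Lemma is_lim_pinfty_of_le_div (F : R -> R) (l B C : R) :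
  (forall b, B < b -> Rabs (F b - l) <= C / b) -> is_lim F p_infty l.
Proof.
  intros H. apply is_lim_spec. intros eps.
  pose proof (cond_pos eps) as Heps.
  exists (Rmax (Rmax B 1) (Rabs C / eps)). intros b Hb.
  pose proof (Rmax_l (Rmax B 1) (Rabs C / eps)). pose proof (Rmax_r (Rmax B 1) (Rabs C / eps)).
  pose proof (Rmax_l B 1). pose proof (Rmax_r B 1).
  apply Rle_lt_trans with (Rabs C / b).
  - eapply Rle_trans; [apply H; lra|].
    apply Rmult_le_compat_r; [left; apply Rinv_0_lt_compat; lra|apply Rle_abs].
  - assert (Hc : Rabs C / eps < b) by lra. apply Rlt_div_l in Hc; [|lra].
    apply Rlt_div_l; lra.
Qed.

(** * Improper integrals *)

(* Unlike [is_RInt_gen], this keeps the partial integrals at hand, which makes comparisons easy. *)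
Definition is_RInt_pinfty (f : R -> R) (a l : R) : Prop :=
  (forall b, a <= b -> ex_RInt f a b) /\ is_lim (fun b => RInt f a b) p_infty l.

Lemma is_RInt_gen_of_pinfty f a l : is_RInt_pinfty f a l ->
  is_RInt_gen f (at_point a) (Rbar_locally p_infty) l.
Proof.
  intros [Hex Hlim] P HP.
  destruct (Hlim P HP) as [M HM].
  apply (Filter_prod _ _ _ (fun x => x = a) (fun b => Rmax M a < b)).
  - reflexivity.
  - exists (Rmax M a); auto.
  - intros x b -> Hb. pose proof (Rmax_l M a). pose proof (Rmax_r M a).
    exists (RInt f a b). split.
    + exact (RInt_correct f a b (Hex b ltac:(lra))).
    + apply HM. lra.
Qed.

Lemma int_to_infty_eq f a l : is_RInt_pinfty f a l -> int_to_infty f a = l.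
Proof. intros H. apply is_RInt_gen_unique. now apply is_RInt_gen_of_pinfty. Qed.

Lemma is_RInt_pinfty_unique f a l1 l2 : is_RInt_pinfty f a l1 -> is_RInt_pinfty f a l2 -> l1 = l2.
Proof. intros H1 H2. now rewrite <- (int_to_infty_eq _ _ _ H1), (int_to_infty_eq _ _ _ H2). Qed.

Lemma is_RInt_pinfty_of_lim (f F : R -> R) (a l : R) :
  (forall b, a <= b -> is_RInt f a b (F b)) -> is_lim F p_infty l -> is_RInt_pinfty f a l.
Proof.
  intros H Hl. split.
  - intros b Hb. eexists; now apply H.
  - apply (is_lim_ext_loc F); [|exact Hl]. exists a. intros b Hb.
    symmetry. apply is_RInt_unique, H. lra.
Qed.

Lemma is_RInt_pinfty_of_antiderivative (F f : R -> R) (a l B C : R) :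
  (forall x, a <= x -> is_derive F x (f x)) -> (forall x, a <= x -> continuous f x) ->
  (forall b, B < b -> Rabs (F b - l) <= C / b) -> is_RInt_pinfty f a (l - F a).
Proof.
  intros HF Hf Hl. apply (is_RInt_pinfty_of_lim _ (fun b => F b - F a)).
  - intros b Hb. apply (is_RInt_derive (V:=R_CompleteNormedModule));
      intros x Hx; rewrite Rmin_left, Rmax_right in Hx by lra; [apply HF|apply Hf]; lra.
  - apply (is_lim_minus' _ (fun _ => F a)); [|apply is_lim_const].
    now apply (is_lim_pinfty_of_le_div _ _ B C).
Qed.

Lemma is_RInt_pinfty_ext f g a l :
  (forall x, a <= x -> f x = g x) -> is_RInt_pinfty f a l -> is_RInt_pinfty g a l.
Proof.
  intros Hfg [Hex Hl].
  assert (Heq : forall b, a <= b -> forall x, Rmin a b < x < Rmax a b -> f x = g x).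
  { intros b Hb x Hx. rewrite Rmin_left in Hx by lra. apply Hfg. lra. }
  split.
  - intros b Hb. apply (ex_RInt_ext f); [apply Heq|apply Hex]; exact Hb.
  - apply (is_lim_ext_loc (fun b => RInt f a b) (fun b => RInt g a b)); [|exact Hl].
    exists a. intros b Hb. apply RInt_ext, Heq. lra.
Qed.

Lemma is_RInt_pinfty_plus f g a l1 l2 :
  is_RInt_pinfty f a l1 -> is_RInt_pinfty g a l2 -> is_RInt_pinfty (fun x => f x + g x) a (l1 + l2).
Proof.
  intros [Hf Hfl] [Hg Hgl]. split.
  - intros b Hb. apply (ex_RInt_plus f g); auto.
  - apply (is_lim_ext_loc (fun b => RInt f a b + RInt g a b) (fun b => RInt (fun x => f x + g x) a b));
      [|now apply is_lim_plus'].
    exists a. intros b Hb. symmetry. apply (RInt_plus f g); [apply Hf|apply Hg]; lra.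
Qed.

Lemma is_RInt_pinfty_scal f c a l :
  is_RInt_pinfty f a l -> is_RInt_pinfty (fun x => c * f x) a (c * l).
Proof.
  intros [Hf Hfl]. split.
  - intros b Hb. apply (ex_RInt_scal f); auto.
  - apply (is_lim_ext_loc (fun b => c * RInt f a b) (fun b => RInt (fun x => c * f x) a b));
      [|now apply (is_lim_scal_l _ c _ l)].
    exists a. intros b Hb. symmetry. apply (RInt_scal f). apply Hf; lra.
Qed.

Lemma is_RInt_pinfty_minus f g a l1 l2 :
  is_RInt_pinfty f a l1 -> is_RInt_pinfty g a l2 -> is_RInt_pinfty (fun x => f x - g x) a (l1 - l2).
Proof.
  intros H1 H2. apply (is_RInt_pinfty_scal g (-1)) in H2.
  apply (is_RInt_pinfty_ext (fun x => f x + -1 * g x)); [intros; ring|].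
  replace (l1 - l2) with (l1 + -1 * l2) by ring. now apply is_RInt_pinfty_plus.
Qed.

Lemma is_RInt_pinfty_le f g a l1 l2 : (forall x, a <= x -> f x <= g x) ->
  is_RInt_pinfty f a l1 -> is_RInt_pinfty g a l2 -> l1 <= l2.
Proof.
  intros Hfg [Hf Hfl] [Hg Hgl].
  change (Rbar_le l1 l2).
  apply (is_lim_le_loc (fun b => RInt f a b) (fun b => RInt g a b) p_infty); auto.
  exists a. intros b Hb. apply RInt_le; [lra|apply Hf; lra|apply Hg; lra|].
  intros; apply Hfg; lra.
Qed.

Lemma is_RInt_pinfty_abs_le f g a l1 l2 : (forall x, a <= x -> Rabs (f x) <= g x) ->
  is_RInt_pinfty f a l1 -> is_RInt_pinfty g a l2 -> Rabs l1 <= l2.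
Proof.
  intros Hfg H1 H2. apply Rabs_le. split.
  - replace (- l2) with (-1 * l2) by ring.
    apply (is_RInt_pinfty_le (fun x => -1 * g x) f a); [|now apply is_RInt_pinfty_scal|exact H1].
    intros x Hx. specialize (Hfg x Hx). apply Rabs_le_between in Hfg. lra.
  - apply (is_RInt_pinfty_le f g a); auto.
    intros x Hx. specialize (Hfg x Hx). apply Rabs_le_between in Hfg. lra.
Qed.

Lemma is_RInt_pinfty_ub f a l B K :
  (forall b, B < b -> RInt f a b <= K) -> is_RInt_pinfty f a l -> l <= K.
Proof.
  intros HK [_ Hl]. change (Rbar_le l K).
  apply (is_lim_le_loc (fun b => RInt f a b) (fun _ => K) p_infty); auto using is_lim_const.
  now exists B.
Qed.

Lemma is_RInt_pinfty_lb f a l B K :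
  (forall b, B < b -> K <= RInt f a b) -> is_RInt_pinfty f a l -> K <= l.
Proof.
  intros HK [_ Hl]. change (Rbar_le K l).
  apply (is_lim_le_loc (fun _ => K) (fun b => RInt f a b) p_infty); auto using is_lim_const.
  now exists B.
Qed.

Lemma is_RInt_pinfty_Chasles (f : R -> R) a a' l : a <= a' ->
  (forall b, a <= b -> ex_RInt f a b) ->
  is_RInt_pinfty f a' l -> is_RInt_pinfty f a (RInt f a a' + l).
Proof.
  intros Haa Hex [Hex' Hl]. split; auto.
  apply (is_lim_ext_loc (fun b => RInt f a a' + RInt f a' b) (fun b => RInt f a b)).
  - exists a'. intros b Hb.
    apply (RInt_Chasles f); [apply Hex|apply Hex']; lra.
  - apply is_lim_plus'; [apply is_lim_const|exact Hl].
Qed.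

Lemma is_RInt_pinfty_of_bounded (f : R -> R) (a K : R) : (forall x, continuous f x) ->
  (forall x, a <= x -> 0 <= f x) -> (forall b, a <= b -> RInt f a b <= K) ->
  exists l, is_RInt_pinfty f a l.
Proof.
  intros Hc Hpos HK.
  set (Ev := fun y => exists b, a <= b /\ y = RInt f a b).
  assert (Hb : bound Ev) by (exists K; intros y [b [Hab ->]]; auto).
  assert (Hne : exists y, Ev y) by (exists (RInt f a a), a; split; [lra|auto]).
  destruct (completeness Ev Hb Hne) as [l [Hub Hlub]].
  exists l. split; [intros; now apply ex_RInt_of_continuous|].
  apply is_lim_spec. intros eps. pose proof (cond_pos eps).
  assert (exists b0, a <= b0 /\ l - eps < RInt f a b0) as [b0 [Hab0 Hb0]].
  { apply Classical_Prop.NNPP. intros Hn.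
    enough (l <= l - eps) by lra.
    apply Hlub. intros y [b [Hab ->]].
    apply Rnot_lt_le. intros Hlt. apply Hn. now exists b. }
  exists b0. intros b Hbb.
  assert (RInt f a b <= l) by (apply Hub; exists b; split; [lra|auto]).
  assert (RInt f a b0 <= RInt f a b) by (apply RInt_le_extend; [lra|exact Hc|intros; apply Hpos; lra]).
  rewrite Rabs_left1 by lra. lra.
Qed.

Lemma exp_le_exp_of_le x y : x <= y -> exp x <= exp y.
Proof. intros [H|H]; [left; now apply exp_increasing|subst; lra]. Qed.

Lemma exp_Ropp_mul_exp x : exp (- x) * exp x = 1.
Proof. rewrite <- exp_plus, Rplus_opp_l. apply exp_0. Qed.

Lemma exp_sub_1_sub_abs_le y : Rabs (exp y - 1 - y) <= y ^ 2 * exp (Rabs y).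
Proof.
  pose proof (exp_ineq1_le y). pose proof (exp_ineq1_le (- y)).
  pose proof (exp_Ropp_mul_exp y). pose proof (exp_pos y). pose proof (exp_pos (- y)).
  rewrite Rabs_pos_eq by lra.
  destruct (Rle_dec 0 y).
  - rewrite Rabs_pos_eq by lra.
    assert (0 <= y * (exp y * (exp (- y) - 1 + y))) by (apply Rmult_le_pos; nra).
    nra.
  - rewrite Rabs_left by lra. nra.
Qed.

Lemma mul_exp_neg_le_1 x : 0 <= x -> x * exp (- x) <= 1.
Proof. intros. pose proof (exp_ineq1_le x). pose proof (exp_Ropp_mul_exp x). nra. Qed.

Lemma sqr_mul_exp_neg_le_4 x : 0 <= x -> x ^ 2 * exp (- x) <= 4.
Proof.
  intros Hx. pose proof (exp_ineq1_le (x / 2)). pose proof (exp_Ropp_mul_exp x).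
  pose proof (exp_pos (- x)).
  assert (x ^ 2 / 4 <= exp x).
  { replace x with (x / 2 + x / 2) at 2 by field. rewrite exp_plus. nra. }
  nra.
Qed.

Lemma is_RInt_exp_lin t a b : t <> 0 ->
  is_RInt (fun x => exp (-(t * x))) a b ((exp (-(t * a)) - exp (-(t * b))) / t).
Proof.
  intros Ht.
  replace ((exp (-(t * a)) - exp (-(t * b))) / t)
    with (- exp (-(t * b)) / t - - exp (-(t * a)) / t) by (field; auto).
  apply (is_RInt_of_antiderivative (fun x => - exp (-(t * x)) / t)).
  - intros x. auto_derive; [auto|field; auto].
  - intros x. apply continuous_of_ex_derive. auto_derive. auto.
Qed.

Lemma is_RInt_pinfty_exp t : 0 < t -> is_RInt_pinfty (fun x => exp (-(t * x))) 0 (1 / t).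
Proof.
  intros Ht. replace (1 / t) with (0 - - exp (-(t * 0)) / t)
    by (rewrite Rmult_0_r, Ropp_0, exp_0; field; lra).
  apply (is_RInt_pinfty_of_antiderivative (fun x => - exp (-(t * x)) / t) _ 0 0 0 (1 / t ^ 2)).
  - intros x _. auto_derive; [auto|field; lra].
  - intros x _. apply continuous_of_ex_derive. auto_derive. auto.
  - intros b Hb. pose proof (mul_exp_neg_le_1 (t * b) ltac:(nra)). pose proof (exp_pos (-(t * b))).
    rewrite Rminus_0_r, Rabs_div, Rabs_Ropp, !Rabs_pos_eq by lra.
    replace (exp (-(t * b)) / t) with (t * b * exp (-(t * b)) * (1 / (t ^ 2 * b))) by (field; lra).
    replace (1 / t ^ 2 / b) with (1 * (1 / (t ^ 2 * b))) by (field; lra).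
    apply Rmult_le_compat_r; [|lra].
    apply Rlt_le, Rdiv_lt_0_compat; [lra|]. apply Rmult_lt_0_compat; [apply pow_lt|]; lra.
Qed.

Lemma is_RInt_pinfty_mul_exp c : 0 < c -> is_RInt_pinfty (fun x => x * exp (-(c * x))) 0 (1 / c ^ 2).
Proof.
  intros Hc. replace (1 / c ^ 2) with (0 - - (0 / c + 1 / c ^ 2) * exp (-(c * 0)))
    by (rewrite Rmult_0_r, Ropp_0, exp_0; field; lra).
  apply (is_RInt_pinfty_of_antiderivative (fun x => - (x / c + 1 / c ^ 2) * exp (-(c * x)))
           _ 0 0 0 (5 / c ^ 3)).
  - intros x _. auto_derive; [auto|field; lra].
  - intros x _. apply continuous_of_ex_derive. auto_derive. auto.
  - intros b Hb. pose proof (exp_pos (-(c * b))).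
    pose proof (mul_exp_neg_le_1 (c * b) ltac:(nra)). pose proof (sqr_mul_exp_neg_le_4 (c * b) ltac:(nra)).
    assert (0 <= b / c) by (apply Rle_mult_inv_pos; lra).
    assert (0 < 1 / c ^ 2) by (apply Rdiv_lt_0_compat; [lra|apply pow_lt; lra]).
    rewrite Rminus_0_r, Ropp_mult_distr_l_reverse, Rabs_Ropp, Rabs_pos_eq by nra.
    replace ((b / c + 1 / c ^ 2) * exp (-(c * b)))
      with (((c * b) ^ 2 * exp (-(c * b)) + c * b * exp (-(c * b))) * (1 / (c ^ 3 * b))) by (field; lra).
    replace (5 / c ^ 3 / b) with (5 * (1 / (c ^ 3 * b))) by (field; lra).
    apply Rmult_le_compat_r; [|lra].
    apply Rlt_le, Rdiv_lt_0_compat; [lra|]. apply Rmult_lt_0_compat; [apply pow_lt|]; lra.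
Qed.

(** * Laplace transforms of bounded functions *)

Definition Laplace (g : R -> R) (t : R) : R := int_to_infty (fun x => exp (-(t * x)) * g x) 0.

Section LaplaceBounded.

Variables (g : R -> R) (K : R).
Hypothesis g_cont : forall x, continuous g x.
Hypothesis g_bounds : forall x, 0 <= x -> 0 <= g x <= K.

Let integrand_cont t x : continuous (fun x => exp (-(t * x)) * g x) x.
Proof.
  apply (continuous_mult (fun x => exp (-(t * x))) g); [|apply g_cont].
  apply continuous_of_ex_derive. auto_derive. auto.
Qed.

Let integrand_ge0 t x : 0 <= x -> 0 <= exp (-(t * x)) * g x.
Proof. intros Hx. apply Rmult_le_pos; [apply Rlt_le, exp_pos|apply g_bounds, Hx]. Qed.

Let RInt_integrand_le t b : 0 < t -> 0 <= b -> RInt (fun x => exp (-(t * x)) * g x) 0 b <= K / t.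
Proof.
  intros Ht Hb. pose proof (is_RInt_exp_lin t 0 b ltac:(lra)) as Hexp.
  apply Rle_trans with (RInt (fun x => K * exp (-(t * x))) 0 b).
  - apply RInt_le; [exact Hb|now apply ex_RInt_of_continuous| |].
    { apply ex_RInt_of_continuous. intros x. apply continuous_of_ex_derive. auto_derive. auto. }
    intros x Hx. rewrite (Rmult_comm K). apply Rmult_le_compat_l; [apply Rlt_le, exp_pos|apply g_bounds; lra].
  - rewrite (RInt_scal (fun x => exp (-(t * x)))) by (eexists; eauto).
    rewrite (is_RInt_unique _ _ _ _ Hexp), Rmult_0_r, Ropp_0, exp_0.
    pose proof (exp_pos (-(t * b))). destruct (g_bounds 0 (Rle_refl 0)) as [H0 HK].
    replace (K / t) with (K * (1 / t)) by (field; lra). apply Rmult_le_compat_l; [lra|].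
    apply Rmult_le_compat_r; [left; now apply Rinv_0_lt_compat|lra].
Qed.

Lemma is_RInt_pinfty_Laplace t : 0 < t ->
  is_RInt_pinfty (fun x => exp (-(t * x)) * g x) 0 (Laplace g t).
Proof.
  intros Ht.
  destruct (is_RInt_pinfty_of_bounded _ 0 (K / t) (integrand_cont t) (integrand_ge0 t))
    as [l Hl]; [intros; now apply RInt_integrand_le|].
  replace (Laplace g t) with l; [exact Hl|]. symmetry. exact (int_to_infty_eq _ _ _ Hl).
Qed.

Lemma Laplace_bounds t : 0 < t -> 0 <= Laplace g t <= K / t.
Proof.
  intros Ht. pose proof (is_RInt_pinfty_Laplace t Ht) as HL. split.
  - apply (is_RInt_pinfty_lb (fun x => exp (-(t * x)) * g x) 0 _ 0 0); [|exact HL].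
    intros b Hb. apply RInt_ge_0; [lra|now apply ex_RInt_of_continuous|].
    intros; apply integrand_ge0; lra.
  - apply (is_RInt_pinfty_ub (fun x => exp (-(t * x)) * g x) 0 _ 0 (K / t)); [|exact HL].
    intros b Hb. apply RInt_integrand_le; lra.
Qed.

End LaplaceBounded.

Lemma exp_shift_taylor_abs_le s h x : 0 <= x ->
  Rabs (exp (-((s + h) * x)) - exp (-(s * x)) + h * (x * exp (-(s * x))))
  <= h ^ 2 * x ^ 2 * exp (-((s - Rabs h) * x)).
Proof.
  intros Hx. pose proof (exp_sub_1_sub_abs_le (-(h * x))) as Ht.
  rewrite Rabs_Ropp, Rabs_mult, (Rabs_pos_eq x Hx) in Ht.
  replace (exp (-((s + h) * x)) - exp (-(s * x)) + h * (x * exp (-(s * x))))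
    with (exp (-(s * x)) * (exp (-(h * x)) - 1 - -(h * x)))
    by (replace (-((s + h) * x)) with (-(s * x) + -(h * x)) by ring; rewrite exp_plus; ring).
  replace (-((s - Rabs h) * x)) with (-(s * x) + Rabs h * x) by ring.
  rewrite Rabs_mult, (Rabs_pos_eq (exp _)) by apply Rlt_le, exp_pos. rewrite exp_plus.
  replace (h ^ 2 * x ^ 2 * (exp (-(s * x)) * exp (Rabs h * x)))
    with (exp (-(s * x)) * ((-(h * x)) ^ 2 * exp (Rabs h * x))) by ring.
  apply Rmult_le_compat_l; [apply Rlt_le, exp_pos|exact Ht].
Qed.

Lemma Laplace_taylor_abs_le g K K' s h : (forall x, continuous g x) ->
  (forall x, 0 <= x -> 0 <= g x <= K) -> (forall x, 0 <= x -> 0 <= x * g x <= K') ->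
  0 < s -> Rabs h <= s / 2 ->
  Rabs (Laplace g (s + h) - Laplace g s + h * Laplace (fun x => x * g x) s) <= 4 * K' / s ^ 2 * h ^ 2.
Proof.
  intros Hc Hg Hxg Hs Hh.
  assert (Hcx : forall x, continuous (fun x => x * g x) x)
    by (intros x; apply (continuous_mult (fun x => x) g); [apply continuous_id|apply Hc]).
  assert (Hsh : 0 < s + h) by (pose proof (Rabs_le_between h (s / 2)) as [H _]; specialize (H Hh); lra).
  set (c := s - Rabs h). assert (Hc2 : s / 2 <= c) by (unfold c; lra).
  assert (HD : is_RInt_pinfty (fun x => (exp (-((s + h) * x)) * g x - exp (-(s * x)) * g x)
                                       + h * (exp (-(s * x)) * (x * g x))) 0
                 (Laplace g (s + h) - Laplace g s + h * Laplace (fun x => x * g x) s)).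
  { apply is_RInt_pinfty_plus; [apply is_RInt_pinfty_minus|apply is_RInt_pinfty_scal];
      eapply is_RInt_pinfty_Laplace; eauto. }
  assert (Hmaj : is_RInt_pinfty (fun x => h ^ 2 * K' * (x * exp (-(c * x)))) 0 (h ^ 2 * K' * (1 / c ^ 2)))
    by (apply is_RInt_pinfty_scal, is_RInt_pinfty_mul_exp; lra).
  assert (Hpt : forall x, 0 <= x ->
    Rabs ((exp (-((s + h) * x)) * g x - exp (-(s * x)) * g x) + h * (exp (-(s * x)) * (x * g x)))
    <= h ^ 2 * K' * (x * exp (-(c * x)))).
  { intros x Hx. destruct (Hg x Hx). destruct (Hxg x Hx).
    replace ((exp (-((s + h) * x)) * g x - exp (-(s * x)) * g x) + h * (exp (-(s * x)) * (x * g x)))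
      with (g x * (exp (-((s + h) * x)) - exp (-(s * x)) + h * (x * exp (-(s * x))))) by ring.
    rewrite Rabs_mult, (Rabs_pos_eq (g x)) by lra.
    eapply Rle_trans; [apply Rmult_le_compat_l; [lra|apply exp_shift_taylor_abs_le, Hx]|].
    fold c. pose proof (exp_pos (-(c * x))).
    replace (g x * (h ^ 2 * x ^ 2 * exp (-(c * x)))) with (h ^ 2 * (x * g x) * (x * exp (-(c * x)))) by ring.
    apply Rmult_le_compat_r; [nra|]. apply Rmult_le_compat_l; [apply pow2_ge_0|lra]. }
  eapply Rle_trans; [exact (is_RInt_pinfty_abs_le _ _ 0 _ _ Hpt HD Hmaj)|].
  assert (0 <= K') by (destruct (Hxg 0 (Rle_refl 0)); lra).
  assert (1 / c ^ 2 <= 4 / s ^ 2).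
  { apply Rle_div_l; [apply pow_lt; lra|].
    replace (4 / s ^ 2 * c ^ 2) with (4 * (c / s) ^ 2) by (field; lra).
    assert (0 <= (c - s / 2) / s) by (apply Rle_mult_inv_pos; lra).
    replace (c / s) with (1 / 2 + (c - s / 2) / s) by (field; lra). nra. }
  replace (4 * K' / s ^ 2 * h ^ 2) with (h ^ 2 * K' * (4 / s ^ 2)) by (field; lra).
  apply Rmult_le_compat_l; [apply Rmult_le_pos; [apply pow2_ge_0|lra]|lra].
Qed.

Lemma is_derive_Laplace g K K' s : (forall x, continuous g x) ->
  (forall x, 0 <= x -> 0 <= g x <= K) -> (forall x, 0 <= x -> 0 <= x * g x <= K') -> 0 < s ->
  is_derive (Laplace g) s (- Laplace (fun x => x * g x) s).
Proof.
  intros Hc Hg Hxg Hs. apply is_derive_Reals. intros eps Heps.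
  set (A := 4 * K' / s ^ 2).
  assert (HA : 0 <= A).
  { destruct (Hxg 0 (Rle_refl 0)). apply Rle_mult_inv_pos; [lra|apply pow_lt; lra]. }
  assert (Hd : 0 < Rmin (s / 2) (eps / (A + 1))) by (apply Rmin_pos; apply Rdiv_lt_0_compat; lra).
  exists (mkposreal _ Hd). intros h Hh0 Hhd. simpl in Hhd.
  pose proof (Rmin_l (s / 2) (eps / (A + 1))). pose proof (Rmin_r (s / 2) (eps / (A + 1))).
  pose proof (Rabs_pos_lt h Hh0) as Hh.
  pose proof (Laplace_taylor_abs_le g K K' s h Hc Hg Hxg Hs ltac:(lra)) as Hrem. fold A in Hrem.
  assert (Heps' : Rabs h * (A + 1) < eps) by (apply Rlt_div_r; lra).
  replace ((Laplace g (s + h) - Laplace g s) / h - - Laplace (fun x => x * g x) s)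
    with ((Laplace g (s + h) - Laplace g s + h * Laplace (fun x => x * g x) s) / h) by (field; auto).
  rewrite Rabs_div by auto. apply Rlt_div_l; [lra|].
  eapply Rle_lt_trans; [exact Hrem|]. rewrite <- pow2_abs. nra.
Qed.

(** * The auxiliary functions of the sine and cosine integrals *)

Definition kernel_f (x : R) : R := 1 / (1 + x ^ 2).
Definition kernel_g (x : R) : R := x / (1 + x ^ 2).

(* The functions f and g of Abramowitz-Stegun 5.2.12-13; E = g + i f. *)
Definition aux_f (t : R) : R := Laplace kernel_f t.
Definition aux_g (t : R) : R := Laplace kernel_g t.

Lemma continuous_kernel_f x : continuous kernel_f x.
Proof. apply continuous_of_ex_derive. unfold kernel_f. auto_derive. nra. Qed.

Lemma continuous_kernel_g x : continuous kernel_g x.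
Proof. apply continuous_of_ex_derive. unfold kernel_g. auto_derive. nra. Qed.

Lemma kernel_f_bounds x : 0 <= x -> 0 <= kernel_f x <= 1.
Proof. intros. unfold kernel_f. split; [apply Rle_mult_inv_pos|apply Rle_div_l]; nra. Qed.

Lemma kernel_g_bounds x : 0 <= x -> 0 <= kernel_g x <= 1.
Proof. intros. unfold kernel_g. split; [apply Rle_mult_inv_pos|apply Rle_div_l]; nra. Qed.

Lemma mul_kernel_f x : x * kernel_f x = kernel_g x.
Proof. unfold kernel_f, kernel_g. field. nra. Qed.

Lemma mul_kernel_g x : x * kernel_g x = 1 - kernel_f x.
Proof. unfold kernel_f, kernel_g. field. nra. Qed.

Lemma mul_kernel_g_bounds x : 0 <= x -> 0 <= x * kernel_g x <= 1.
Proof. intros. rewrite mul_kernel_g. pose proof (kernel_f_bounds x H). lra. Qed.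

Lemma is_RInt_pinfty_aux_f t : 0 < t ->
  is_RInt_pinfty (fun x => exp (-(t * x)) * kernel_f x) 0 (aux_f t).
Proof. intros. apply (is_RInt_pinfty_Laplace _ 1); auto using continuous_kernel_f, kernel_f_bounds. Qed.

Lemma is_RInt_pinfty_aux_g t : 0 < t ->
  is_RInt_pinfty (fun x => exp (-(t * x)) * kernel_g x) 0 (aux_g t).
Proof. intros. apply (is_RInt_pinfty_Laplace _ 1); auto using continuous_kernel_g, kernel_g_bounds. Qed.

Lemma aux_f_bounds t : 0 < t -> 0 <= aux_f t <= 1 / t.
Proof. intros. apply (Laplace_bounds _ 1); auto using continuous_kernel_f, kernel_f_bounds. Qed.

Lemma aux_g_bounds t : 0 < t -> 0 <= aux_g t <= 1 / t.
Proof. intros. apply (Laplace_bounds _ 1); auto using continuous_kernel_g, kernel_g_bounds. Qed.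

Lemma is_derive_aux_f t : 0 < t -> is_derive aux_f t (- aux_g t).
Proof.
  intros Ht. unfold aux_f, aux_g.
  replace kernel_g with (fun x => x * kernel_f x)
    by (apply functional_extensionality, mul_kernel_f).
  apply (is_derive_Laplace _ 1 1); auto using continuous_kernel_f, kernel_f_bounds.
  intros x Hx. rewrite mul_kernel_f. now apply kernel_g_bounds.
Qed.

Lemma is_derive_aux_g t : 0 < t -> is_derive aux_g t (aux_f t - 1 / t).
Proof.
  intros Ht.
  assert (Hxg : is_RInt_pinfty (fun x => exp (-(t * x)) * (x * kernel_g x)) 0
                  (Laplace (fun x => x * kernel_g x) t)).
  { apply (is_RInt_pinfty_Laplace _ 1); auto using mul_kernel_g_bounds.
    intros x. apply (continuous_mult (fun x => x) kernel_g); auto using continuous_id, continuous_kernel_g. }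
  assert (Hdiff : is_RInt_pinfty (fun x => exp (-(t * x)) * (x * kernel_g x)) 0 (1 / t - aux_f t)).
  { eapply is_RInt_pinfty_ext;
      [|exact (is_RInt_pinfty_minus _ _ _ _ _ (is_RInt_pinfty_exp t Ht) (is_RInt_pinfty_aux_f t Ht))].
    intros x _. rewrite mul_kernel_g. ring. }
  replace (aux_f t - 1 / t) with (- Laplace (fun x => x * kernel_g x) t)
    by (rewrite (is_RInt_pinfty_unique _ _ _ _ Hxg Hdiff); ring).
  apply (is_derive_Laplace _ 1 1); auto using continuous_kernel_g, kernel_g_bounds, mul_kernel_g_bounds.
Qed.

Definition prim_cos_div (t u : R) : R := sin u * aux_f (u + t) - cos u * aux_g (u + t).
Definition prim_sin_div (t u : R) : R := - (sin u * aux_g (u + t) + cos u * aux_f (u + t)).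

Lemma is_derive_prim_cos_div t u : 0 < u + t -> is_derive (prim_cos_div t) u (cos u / (u + t)).
Proof.
  intros H. unfold prim_cos_div.
  pose proof (is_derive_aux_f _ H) as Hf. pose proof (is_derive_aux_g _ H) as Hg.
  auto_derive.
  - repeat split; auto; eexists; eauto.
  - replace (Derive (fun x => aux_f x) (u + t)) with (- aux_g (u + t))
      by (symmetry; now apply is_derive_unique).
    replace (Derive (fun x => aux_g x) (u + t)) with (aux_f (u + t) - 1 / (u + t))
      by (symmetry; now apply is_derive_unique).
    field. lra.
Qed.

Lemma is_derive_prim_sin_div t u : 0 < u + t -> is_derive (prim_sin_div t) u (sin u / (u + t)).
Proof.
  intros H. unfold prim_sin_div.
  pose proof (is_derive_aux_f _ H) as Hf. pose proof (is_derive_aux_g _ H) as Hg.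
  auto_derive.
  - repeat split; auto; eexists; eauto.
  - replace (Derive (fun x => aux_f x) (u + t)) with (- aux_g (u + t))
      by (symmetry; now apply is_derive_unique).
    replace (Derive (fun x => aux_g x) (u + t)) with (aux_f (u + t) - 1 / (u + t))
      by (symmetry; now apply is_derive_unique).
    field. lra.
Qed.

Lemma Rabs_comb_le a b p q r : Rabs a <= 1 -> Rabs b <= 1 -> 0 <= p <= r -> 0 <= q <= r ->
  Rabs (a * p + b * q) <= 2 * r.
Proof.
  intros Ha Hb Hp Hq. eapply Rle_trans; [apply Rabs_triang|].
  rewrite !Rabs_mult, (Rabs_pos_eq p), (Rabs_pos_eq q) by lra.
  pose proof (Rabs_pos a). pose proof (Rabs_pos b). nra.
Qed.

Lemma Rabs_sin_le_1 u : Rabs (sin u) <= 1.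
Proof. pose proof (SIN_bound u). apply Rabs_le. lra. Qed.

Lemma Rabs_cos_le_1 u : Rabs (cos u) <= 1.
Proof. pose proof (COS_bound u). apply Rabs_le. lra. Qed.

Lemma prim_cos_div_abs_le t u : 0 <= t -> 0 < u -> Rabs (prim_cos_div t u) <= 2 / u.
Proof.
  intros Ht Hu. unfold prim_cos_div.
  pose proof (aux_f_bounds (u + t) ltac:(lra)). pose proof (aux_g_bounds (u + t) ltac:(lra)).
  assert (1 / (u + t) <= 1 / u) by (apply Rmult_le_compat_l; [lra|apply Rinv_le_contravar; lra]).
  replace (2 / u) with (2 * (1 / u)) by (field; lra).
  replace (sin u * aux_f (u + t) - cos u * aux_g (u + t)) with (sin u * aux_f (u + t) + - cos u * aux_g (u + t))
    by ring.
  apply Rabs_comb_le; [apply Rabs_sin_le_1|rewrite Rabs_Ropp; apply Rabs_cos_le_1|lra|lra].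
Qed.

Lemma prim_sin_div_abs_le t u : 0 <= t -> 0 < u -> Rabs (prim_sin_div t u) <= 2 / u.
Proof.
  intros Ht Hu. unfold prim_sin_div. rewrite Rabs_Ropp.
  pose proof (aux_f_bounds (u + t) ltac:(lra)). pose proof (aux_g_bounds (u + t) ltac:(lra)).
  assert (1 / (u + t) <= 1 / u) by (apply Rmult_le_compat_l; [lra|apply Rinv_le_contravar; lra]).
  replace (2 / u) with (2 * (1 / u)) by (field; lra).
  apply Rabs_comb_le; [apply Rabs_sin_le_1|apply Rabs_cos_le_1|lra|lra].
Qed.

Lemma is_RInt_pinfty_cos_div t a : 0 <= t -> 0 <= a -> 0 < a + t ->
  is_RInt_pinfty (fun u => cos u / (u + t)) a (cos a * aux_g (a + t) - sin a * aux_f (a + t)).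
Proof.
  intros Ht Ha Hat.
  replace (cos a * aux_g (a + t) - sin a * aux_f (a + t)) with (0 - prim_cos_div t a)
    by (unfold prim_cos_div; ring).
  apply (is_RInt_pinfty_of_antiderivative _ _ a 0 a 2).
  - intros x Hx. apply is_derive_prim_cos_div. lra.
  - intros x Hx. apply continuous_of_ex_derive. auto_derive. lra.
  - intros b Hb. rewrite Rminus_0_r. apply prim_cos_div_abs_le; lra.
Qed.

Lemma is_RInt_pinfty_sin_div t a : 0 <= t -> 0 <= a -> 0 < a + t ->
  is_RInt_pinfty (fun u => sin u / (u + t)) a (sin a * aux_g (a + t) + cos a * aux_f (a + t)).
Proof.
  intros Ht Ha Hat.
  replace (sin a * aux_g (a + t) + cos a * aux_f (a + t)) with (0 - prim_sin_div t a)
    by (unfold prim_sin_div; ring).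
  apply (is_RInt_pinfty_of_antiderivative _ _ a 0 a 2).
  - intros x Hx. apply is_derive_prim_sin_div. lra.
  - intros x Hx. apply continuous_of_ex_derive. auto_derive. lra.
  - intros b Hb. rewrite Rminus_0_r. apply prim_sin_div_abs_le; lra.
Qed.

Lemma E_eq t : 0 < t -> E t = (aux_g t, aux_f t).
Proof.
  intros Ht. unfold E. f_equal; apply int_to_infty_eq.
  - pose proof (is_RInt_pinfty_cos_div t 0 ltac:(lra) ltac:(lra) ltac:(lra)) as H.
    rewrite cos_0, sin_0, Rplus_0_l in H. now replace (aux_g t) with (1 * aux_g t - 0 * aux_f t) by ring.
  - pose proof (is_RInt_pinfty_sin_div t 0 ltac:(lra) ltac:(lra) ltac:(lra)) as H.
    rewrite cos_0, sin_0, Rplus_0_l in H. now replace (aux_f t) with (0 * aux_g t + 1 * aux_f t) by ring.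
Qed.

Definition sine_tail (t : R) : R := sin t * aux_g t + cos t * aux_f t.

Lemma is_RInt_pinfty_sin_div_id t : 0 < t -> is_RInt_pinfty (fun u => sin u / u) t (sine_tail t).
Proof.
  intros Ht. pose proof (is_RInt_pinfty_sin_div 0 t ltac:(lra) ltac:(lra) ltac:(lra)) as H.
  rewrite Rplus_0_r in H. eapply is_RInt_pinfty_ext; [|exact H].
  intros u _. cbv beta. now rewrite Rplus_0_r.
Qed.

Lemma si_eq t : 0 < t -> si t = - sine_tail t.
Proof. intros Ht. unfold si. f_equal. now apply int_to_infty_eq, is_RInt_pinfty_sin_div_id. Qed.

(** * The bound |E| < M *)

Lemma sqrt_sqr_plus_1_pos u : 0 < sqrt (u ^ 2 + 1).
Proof. apply sqrt_lt_R0. nra. Qed.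

Lemma sqrt_sqr_plus_1_neq0 u : sqrt (u ^ 2 + 1) <> 0.
Proof. apply Rgt_not_eq, sqrt_sqr_plus_1_pos. Qed.

Lemma sqrt_sqr_plus_1_sqr u : sqrt (u ^ 2 + 1) ^ 2 = u ^ 2 + 1.
Proof. apply pow2_sqrt. nra. Qed.

Lemma one_le_of_one_le_sqr x : 0 <= x -> 1 <= x ^ 2 -> 1 <= x.
Proof. intros H0 H1. destruct (Rle_lt_dec 1 x) as [H|H]; [exact H|nra]. Qed.

Definition M_integrand (t u : R) : R := exp (-(t * u)) / sqrt (u ^ 2 + 1).

Lemma continuous_M_integrand t u : continuous (M_integrand t) u.
Proof.
  apply continuous_of_ex_derive. unfold M_integrand. auto_derive.
  repeat split; [nra|apply sqrt_sqr_plus_1_neq0].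
Qed.

Lemma M_integrand_pos t u : 0 < M_integrand t u.
Proof. apply Rdiv_lt_0_compat; [apply exp_pos|apply sqrt_sqr_plus_1_pos]. Qed.

Lemma is_RInt_pinfty_M t : 0 < t -> is_RInt_pinfty (M_integrand t) 0 (M t).
Proof.
  intros Ht.
  assert (Hk : forall x, 0 <= x -> 0 <= 1 / sqrt (x ^ 2 + 1) <= 1).
  { intros x Hx. pose proof (sqrt_sqr_plus_1_pos x). pose proof (sqrt_sqr_plus_1_sqr x).
    split; [apply Rle_mult_inv_pos|apply Rle_div_l]; nra. }
  assert (Hc : forall x, continuous (fun x => 1 / sqrt (x ^ 2 + 1)) x).
  { intros x. apply continuous_of_ex_derive. auto_derive. repeat split; [nra|apply sqrt_sqr_plus_1_neq0]. }
  pose proof (is_RInt_pinfty_Laplace _ 1 Hc Hk t Ht) as HL.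
  apply (is_RInt_pinfty_ext _ (M_integrand t)) in HL; [|intros u _; unfold M_integrand, Rdiv; ring].
  replace (M t) with (Laplace (fun x => 1 / sqrt (x ^ 2 + 1)) t); [exact HL|].
  symmetry. exact (int_to_infty_eq _ _ _ HL).
Qed.

Lemma M_pos t : 0 < t -> 0 < M t.
Proof.
  intros Ht. pose proof (is_RInt_pinfty_M t Ht) as HM.
  apply Rlt_le_trans with (RInt (M_integrand t) 0 1).
  - apply RInt_gt_0; [lra|intros; apply M_integrand_pos|intros; apply continuous_M_integrand].
  - apply (is_RInt_pinfty_lb (M_integrand t) 0 _ 1); [|exact HM].
    intros b Hb. apply RInt_le_extend; [lra|apply continuous_M_integrand|].
    intros; apply Rlt_le, M_integrand_pos.
Qed.

Lemma sqr_sum_gap_ge r s p q : 0 < r -> 0 < s -> p ^ 2 + q ^ 2 = r ^ 2 * s ^ 2 ->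
  q ^ 2 / (2 * r * s ^ 3) <= r / s - p / s ^ 2.
Proof.
  intros Hr Hs Hpq. assert (0 < 2 * r * s ^ 3) by (apply Rmult_lt_0_compat; [lra|apply pow_lt; lra]).
  apply Rle_div_l; [lra|].
  replace ((r / s - p / s ^ 2) * (2 * r * s ^ 3)) with (2 * r ^ 2 * s ^ 2 - 2 * r * p * s) by (field; lra).
  nra.
Qed.

Lemma is_RInt_sqr_lin a b : is_RInt (fun u => (b * u - a) ^ 2) 0 1 (b ^ 2 / 3 - a * b + a ^ 2).
Proof.
  replace (b ^ 2 / 3 - a * b + a ^ 2)
    with ((b ^ 2 * 1 ^ 3 / 3 - a * b * 1 ^ 2 + a ^ 2 * 1) - (b ^ 2 * 0 ^ 3 / 3 - a * b * 0 ^ 2 + a ^ 2 * 0))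
    by field.
  apply (is_RInt_of_antiderivative (fun u => b ^ 2 * u ^ 3 / 3 - a * b * u ^ 2 + a ^ 2 * u)).
  - intros x. auto_derive; [auto|field].
  - intros x. apply continuous_of_ex_derive. auto_derive. auto.
Qed.

Section NormLtM.

Variable t : R.
Hypothesis Ht : 0 < t.
Let a := aux_g t.
Let b := aux_f t.
Let r := sqrt (a ^ 2 + b ^ 2).
Hypothesis Hr : 0 < r.

(* [gap] integrates to [r M t - r ^ 2]: the defect in the triangle inequality for E. *)
Let gap (u : R) : R :=
  r * M_integrand t u - (a * (exp (-(t * u)) * kernel_g u) + b * (exp (-(t * u)) * kernel_f u)).

Let gap_ge u : 0 <= u -> exp (-(t * u)) * ((b * u - a) ^ 2 / (2 * r * sqrt (u ^ 2 + 1) ^ 3)) <= gap u.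
Proof.
  intros Hu. unfold gap, M_integrand, kernel_f, kernel_g.
  pose proof (sqrt_sqr_plus_1_pos u) as Hs. pose proof (sqrt_sqr_plus_1_sqr u) as Hs2.
  set (s := sqrt (u ^ 2 + 1)) in *.
  replace (r * (exp (-(t * u)) / s) - (a * (exp (-(t * u)) * (u / (1 + u ^ 2)))
                                       + b * (exp (-(t * u)) * (1 / (1 + u ^ 2)))))
    with (exp (-(t * u)) * (r / s - (a * u + b) / s ^ 2)) by (rewrite Hs2; field; split; nra).
  apply Rmult_le_compat_l; [apply Rlt_le, exp_pos|].
  apply sqr_sum_gap_ge; [exact Hr|exact Hs|].
  rewrite Hs2. unfold r. rewrite pow2_sqrt by nra. ring.
Qed.

Let gap_ge_on_unit u : 0 <= u <= 1 -> exp (-t) / (6 * r) * (b * u - a) ^ 2 <= gap u.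
Proof.
  intros Hu. eapply Rle_trans; [|apply gap_ge; lra].
  pose proof (sqrt_sqr_plus_1_pos u) as Hs. pose proof (sqrt_sqr_plus_1_sqr u) as Hs2.
  set (s := sqrt (u ^ 2 + 1)) in *.
  assert (s <= 3 / 2) by nra.
  assert (Hs3 : s ^ 3 <= 3) by (replace (s ^ 3) with (s ^ 2 * s) by ring; nra).
  assert (exp (-t) <= exp (-(t * u))) by (apply exp_le_exp_of_le; nra).
  pose proof (exp_pos (-t)). pose proof (pow2_ge_0 (b * u - a)).
  replace (exp (-t) / (6 * r) * (b * u - a) ^ 2) with (exp (-t) * ((b * u - a) ^ 2 / (6 * r))) by (field; lra).
  apply Rmult_le_compat; try lra; [apply Rle_mult_inv_pos; lra|].
  apply Rmult_le_compat_l; [lra|]. apply Rinv_le_contravar; [|nra].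
  apply Rmult_lt_0_compat; [lra|apply pow_lt; lra].
Qed.

Lemma norm_lt_M : r < M t.
Proof.
  assert (Hgap : is_RInt_pinfty gap 0 (r * M t - (a * a + b * b))).
  { apply is_RInt_pinfty_minus; [apply is_RInt_pinfty_scal, is_RInt_pinfty_M, Ht|].
    apply is_RInt_pinfty_plus; apply is_RInt_pinfty_scal.
    - apply is_RInt_pinfty_aux_g, Ht.
    - apply is_RInt_pinfty_aux_f, Ht. }
  assert (Hcont : forall x, continuous gap x).
  { intros x. apply continuous_of_ex_derive. unfold gap, M_integrand, kernel_f, kernel_g. auto_derive.
    repeat split; try nra. apply sqrt_sqr_plus_1_neq0. }
  assert (Hlow : exp (-t) / (6 * r) * (b ^ 2 / 3 - a * b + a ^ 2) <= r * M t - (a * a + b * b)).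
  { apply (is_RInt_pinfty_lb gap 0 _ 1); [|exact Hgap]. intros b' Hb'.
    rewrite <- (is_RInt_unique _ _ _ _ (is_RInt_sqr_lin a b)).
    rewrite <- (RInt_scal (fun u => (b * u - a) ^ 2)) by (eexists; apply is_RInt_sqr_lin).
    apply Rle_trans with (RInt gap 0 1).
    - apply RInt_le; [lra| |now apply ex_RInt_of_continuous|intros; apply gap_ge_on_unit; lra].
      apply (ex_RInt_scal (fun u => (b * u - a) ^ 2)). eexists; apply is_RInt_sqr_lin.
    - apply RInt_le_extend; [lra|exact Hcont|].
      intros x Hx. eapply Rle_trans; [|apply gap_ge; lra].
      apply Rmult_le_pos; [apply Rlt_le, exp_pos|].
      apply Rle_mult_inv_pos; [apply pow2_ge_0|].
      apply Rmult_lt_0_compat; [lra|apply pow_lt, sqrt_sqr_plus_1_pos]. }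
  assert (Hr2 : r ^ 2 = a * a + b * b) by (unfold r; rewrite pow2_sqrt; nra).
  assert (0 < b ^ 2 / 3 - a * b + a ^ 2).
  { assert (0 < r ^ 2) by (apply pow_lt; lra).
    pose proof (pow2_ge_0 (a - b / 2)). pose proof (pow2_ge_0 b). nra. }
  assert (0 < exp (-t) / (6 * r)) by (apply Rdiv_lt_0_compat; [apply exp_pos|lra]).
  assert (r * r < r * M t) by nra.
  apply (Rmult_lt_reg_l r); auto.
Qed.

End NormLtM.

Theorem Cmod_E_lt_M t : 0 < t -> Cmod (E t) < M t.
Proof.
  intros Ht. rewrite E_eq by exact Ht. unfold Cmod, fst, snd.
  destruct (Req_dec (sqrt (aux_g t ^ 2 + aux_f t ^ 2)) 0) as [H0|H0].
  - rewrite H0. now apply M_pos.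
  - apply norm_lt_M; [exact Ht|]. pose proof (sqrt_pos (aux_g t ^ 2 + aux_f t ^ 2)). lra.
Qed.

(** * Arctangent and the function M *)

Lemma le_of_is_derive_nonneg (h dh : R -> R) a b : a <= b ->
  (forall x, a <= x <= b -> is_derive h x (dh x)) -> (forall x, a <= x <= b -> 0 <= dh x) ->
  h a <= h b.
Proof.
  intros Hab Hd Hpos.
  destruct (MVT_gen h a b dh) as [c [Hc Hmvt]]; rewrite ?Rmin_left, ?Rmax_right in * by lra.
  - intros x Hx. apply Hd. lra.
  - intros x Hx. apply derivable_continuous_pt. exists (dh x). apply is_derive_Reals, Hd. lra.
  - enough (0 <= dh c * (b - a)) by lra. apply Rmult_le_pos; [apply Hpos|]; lra.
Qed.

Definition atan_taylor (n : nat) (y : R) : R :=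
  sum_f_R0 (fun k => (-1) ^ k * y ^ (2 * k + 1) / INR (2 * k + 1)) n.

Lemma is_derive_ext_R (f g : R -> R) x l : (forall t, f t = g t) -> is_derive f x l -> is_derive g x l.
Proof. apply is_derive_ext. Qed.

Lemma is_derive_pow_div k y : is_derive (fun y => y ^ S k / INR (S k)) y (y ^ k).
Proof.
  assert (INR (S k) <> 0) by (apply not_0_INR; lia).
  auto_derive; [auto|]. fold (INR (S k)). field. exact H.
Qed.

Lemma is_derive_atan_taylor n y :
  is_derive (atan_taylor n) y (sum_f_R0 (fun k => (-1) ^ k * y ^ (2 * k)) n).
Proof.
  induction n as [|n IH].
  - apply (is_derive_ext_R (fun y => (-1) ^ 0 * (y ^ S 0 / INR (S 0))));
      [intros; unfold atan_taylor; simpl; field|].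
    apply is_derive_scal, is_derive_pow_div.
  - apply (is_derive_ext_R (fun y => atan_taylor n y + (-1) ^ S n * (y ^ S (2 * S n) / INR (S (2 * S n))))).
    { intros z. unfold atan_taylor. cbn [sum_f_R0].
      replace (2 * S n + 1)%nat with (S (2 * S n)) by lia. unfold Rdiv. ring. }
    apply (is_derive_plus (atan_taylor n)); [exact IH|].
    apply is_derive_scal, is_derive_pow_div.
Qed.

Lemma atan_taylor_derivative_mul n y :
  sum_f_R0 (fun k => (-1) ^ k * y ^ (2 * k)) n * (1 + y ^ 2) = 1 + (-1) ^ n * y ^ (2 * n + 2).
Proof.
  induction n as [|n IH]; cbn [sum_f_R0].
  - simpl. ring.
  - rewrite Rmult_plus_distr_r, IH.
    replace (2 * S n + 2)%nat with (2 * n + 2 + 2)%nat by lia.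
    replace (2 * S n)%nat with (2 * n + 2)%nat by lia. rewrite !pow_add. simpl. ring.
Qed.

Lemma atan_taylor_alternating n y : 0 <= y -> 0 <= (-1) ^ n * (atan_taylor n y - atan y).
Proof.
  intros Hy.
  replace 0 with ((-1) ^ n * (atan_taylor n 0 - atan 0))
    by (rewrite atan_0; unfold atan_taylor; rewrite sum_eq_R0; [ring|]; intros k _;
        rewrite Nat.add_1_r, pow_ne_zero by lia; unfold Rdiv; ring).
  apply (le_of_is_derive_nonneg (fun x => (-1) ^ n * (atan_taylor n x - atan x))
           (fun x => x ^ (2 * n + 2) / (1 + x ^ 2))); [exact Hy| |].
  - intros x _.
    assert (Hsq : (-1) ^ n * (-1) ^ n = 1)
      by (rewrite <- Rpow_mult_distr; replace (-1 * -1) with 1 by ring; apply pow1).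
    pose proof (atan_taylor_derivative_mul n x) as Hm.
    set (S := sum_f_R0 (fun k => (-1) ^ k * x ^ (2 * k)) n) in *.
    set (X := x ^ (2 * n + 2)) in *.
    replace (X / (1 + x ^ 2)) with ((-1) ^ n * (S - / (1 + x²))).
    + apply is_derive_scal, (is_derive_minus (atan_taylor n) atan);
        [apply is_derive_atan_taylor|apply is_derive_atan].
    + unfold Rsqr. replace S with ((1 + (-1) ^ n * X) / (1 + x ^ 2)) by (rewrite <- Hm; field; nra).
      replace ((-1) ^ n * ((1 + (-1) ^ n * X) / (1 + x ^ 2) - / (1 + x * x)))
        with ((-1) ^ n * (-1) ^ n * X / (1 + x ^ 2)) by (field; nra).
      now rewrite Hsq, Rmult_1_l.
  - intros x Hx. apply Rle_mult_inv_pos; [apply pow_le; lra|nra].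
Qed.

Lemma atan_le_atan_taylor_even m y : 0 <= y -> atan y <= atan_taylor (2 * m) y.
Proof. intros Hy. pose proof (atan_taylor_alternating (2 * m) y Hy). rewrite pow_1_even in H. lra. Qed.

Lemma atan_taylor_odd_le_atan m y : 0 <= y -> atan_taylor (S (2 * m)) y <= atan y.
Proof. intros Hy. pose proof (atan_taylor_alternating (S (2 * m)) y Hy). rewrite pow_1_odd in H. lra. Qed.

Lemma arccot_eq_atan_inv t : 0 < t -> arccot t = atan (/ t).
Proof. intros Ht. unfold arccot. now rewrite atan_inv. Qed.

Lemma arccot_1 : arccot 1 = atan (/ 2) + atan (/ 3).
Proof. unfold arccot. rewrite atan_1, <- Machin_2_3. field. Qed.

Lemma arccot_ge_tangent m t : 0 < m -> 0 < t -> arccot m - (t - m) / (1 + m ^ 2) <= arccot t.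
Proof.
  intros Hm Ht. unfold arccot.
  enough (atan t - t / (1 + m ^ 2) <= atan m - m / (1 + m ^ 2))
    by (replace ((t - m) / (1 + m ^ 2)) with (t / (1 + m ^ 2) - m / (1 + m ^ 2)) by (field; nra); lra).
  destruct (Rle_lt_dec m t) as [Hmt|Htm].
  - enough (m / (1 + m ^ 2) - atan m <= t / (1 + m ^ 2) - atan t) by lra.
    apply (le_of_is_derive_nonneg (fun x => x / (1 + m ^ 2) - atan x)
             (fun x => / (1 + m ^ 2) - / (1 + x²))); [exact Hmt| |].
    + intros x _. apply (is_derive_minus (fun x => x / (1 + m ^ 2)) atan); [|apply is_derive_atan].
      auto_derive; [nra|field; nra].
    + intros x Hx. enough (/ (1 + x²) <= / (1 + m ^ 2)) by lra. unfold Rsqr. apply Rinv_le_contravar; nra.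
  - apply (le_of_is_derive_nonneg (fun x => atan x - x / (1 + m ^ 2))
             (fun x => / (1 + x²) - / (1 + m ^ 2))); [lra| |].
    + intros x _. apply (is_derive_minus atan (fun x => x / (1 + m ^ 2))); [apply is_derive_atan|].
      auto_derive; [nra|field; nra].
    + intros x Hx. enough (/ (1 + m ^ 2) <= / (1 + x²)) by lra. unfold Rsqr. apply Rinv_le_contravar; nra.
Qed.

Lemma exp_convex x y l : 0 <= l <= 1 -> exp (l * x + (1 - l) * y) <= l * exp x + (1 - l) * exp y.
Proof.
  intros Hl. set (m := l * x + (1 - l) * y).
  replace (exp x) with (exp m * exp (x - m)) by (rewrite <- exp_plus; f_equal; ring).
  replace (exp y) with (exp m * exp (y - m)) by (rewrite <- exp_plus; f_equal; ring).
  pose proof (exp_ineq1_le (x - m)). pose proof (exp_ineq1_le (y - m)). pose proof (exp_pos m).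
  assert (l * (exp m * (1 + (x - m))) + (1 - l) * (exp m * (1 + (y - m))) = exp m) by (unfold m; ring).
  assert (l * (exp m * (1 + (x - m))) <= l * (exp m * exp (x - m))) by
    (apply Rmult_le_compat_l; [lra|apply Rmult_le_compat_l; lra]).
  assert ((1 - l) * (exp m * (1 + (y - m))) <= (1 - l) * (exp m * exp (y - m))) by
    (apply Rmult_le_compat_l; [lra|apply Rmult_le_compat_l; lra]).
  lra.
Qed.

Lemma M_convex t1 t2 l : 0 < t1 -> 0 < t2 -> 0 <= l <= 1 ->
  M (l * t1 + (1 - l) * t2) <= l * M t1 + (1 - l) * M t2.
Proof.
  intros H1 H2 Hl.
  assert (Ht : 0 < l * t1 + (1 - l) * t2) by (destruct (Req_dec l 0); subst; nra).
  apply (is_RInt_pinfty_le (M_integrand (l * t1 + (1 - l) * t2))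
           (fun u => l * M_integrand t1 u + (1 - l) * M_integrand t2 u) 0).
  - intros u Hu. unfold M_integrand.
    replace (-((l * t1 + (1 - l) * t2) * u)) with (l * (-(t1 * u)) + (1 - l) * (-(t2 * u))) by ring.
    pose proof (sqrt_sqr_plus_1_pos u). unfold Rdiv.
    replace (l * (exp (-(t1 * u)) * / sqrt (u ^ 2 + 1)) + (1 - l) * (exp (-(t2 * u)) * / sqrt (u ^ 2 + 1)))
      with ((l * exp (-(t1 * u)) + (1 - l) * exp (-(t2 * u))) * / sqrt (u ^ 2 + 1)) by ring.
    apply Rmult_le_compat_r; [left; now apply Rinv_0_lt_compat|now apply exp_convex].
  - now apply is_RInt_pinfty_M.
  - apply is_RInt_pinfty_plus; apply is_RInt_pinfty_scal; now apply is_RInt_pinfty_M.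
Qed.

Definition inv_sqrt_majorant (u : R) : R := 1 - u ^ 2 / 2 + 3 * u ^ 4 / 8.

(* [- exp (- t u) Q t u] is a primitive of [exp (- t u) p u] for [Q t = sum_k p^(k) / t^(k+1)],
   with [p] the majorant. *)
Definition inv_sqrt_majorant_prim (t u : R) : R :=
  inv_sqrt_majorant u / t + (- u + 3 * u ^ 3 / 2) / t ^ 2 + (-1 + 9 * u ^ 2 / 2) / t ^ 3
  + 9 * u / t ^ 4 + 9 / t ^ 5.

Lemma inv_sqrt_le_majorant u : 1 / sqrt (u ^ 2 + 1) <= inv_sqrt_majorant u.
Proof.
  pose proof (sqrt_sqr_plus_1_pos u) as Hs. pose proof (sqrt_sqr_plus_1_sqr u) as Hs2.
  set (s := sqrt (u ^ 2 + 1)) in *. unfold inv_sqrt_majorant.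
  assert (Hid : ((1 - u ^ 2 / 2 + 3 * u ^ 4 / 8) * s) ^ 2
                = 1 + (u ^ 3) ^ 2 * (40 - 15 * u ^ 2 + 9 * u ^ 4) / 64)
    by (replace (((1 - u ^ 2 / 2 + 3 * u ^ 4 / 8) * s) ^ 2)
          with ((1 - u ^ 2 / 2 + 3 * u ^ 4 / 8) ^ 2 * s ^ 2) by ring; rewrite Hs2; field).
  assert (0 <= (u ^ 3) ^ 2 * (40 - 15 * u ^ 2 + 9 * u ^ 4) / 64)
    by (apply Rmult_le_pos; [apply Rmult_le_pos; [apply pow2_ge_0|nra]|lra]).
  apply Rle_div_l; [lra|]. apply one_le_of_one_le_sqr; [nra|lra].
Qed.

Lemma inv_sqrt_majorant_prim_nonneg t u : 4 <= t -> 0 <= u -> 0 <= inv_sqrt_majorant_prim t u.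
Proof.
  intros Ht Hu. unfold inv_sqrt_majorant_prim, inv_sqrt_majorant.
  replace ((1 - u ^ 2 / 2 + 3 * u ^ 4 / 8) / t + (- u + 3 * u ^ 3 / 2) / t ^ 2 + (-1 + 9 * u ^ 2 / 2) / t ^ 3
           + 9 * u / t ^ 4 + 9 / t ^ 5)
    with ((t ^ 4 * (1 - u ^ 2 / 2 + 3 * u ^ 4 / 8) + t ^ 3 * (- u + 3 * u ^ 3 / 2)
           + t ^ 2 * (-1 + 9 * u ^ 2 / 2) + t * (9 * u) + 9) / t ^ 5) by (field; lra).
  apply Rle_mult_inv_pos; [|apply pow_lt; lra].
  assert (t ^ 3 * u <= t ^ 4 * u / 4).
  { assert (0 <= t ^ 3 * u * (t - 4)) by (repeat apply Rmult_le_pos; try apply pow_le; lra). lra. }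
  assert (t ^ 2 <= t ^ 4 / 16).
  { assert (0 <= t ^ 2 * (t ^ 2 - 16)) by (apply Rmult_le_pos; [apply pow_le; lra|nra]). lra. }
  assert (0 <= t ^ 4 * (15 / 16 - u / 4 - u ^ 2 / 2 + 3 * u ^ 4 / 8)).
  { apply Rmult_le_pos; [apply pow_le; lra|].
    pose proof (pow2_ge_0 (u ^ 2 - 1)). pose proof (pow2_ge_0 (u - 1 / 2)). nra. }
  assert (0 <= t ^ 3 * (3 * u ^ 3 / 2)) by (apply Rmult_le_pos; [apply pow_le|]; nra).
  assert (0 <= t ^ 2 * (9 * u ^ 2 / 2)) by (apply Rmult_le_pos; [apply pow_le|]; nra).
  nra.
Qed.

Lemma M_le_asymptotic t : 4 <= t -> M t <= 1 / t - 1 / t ^ 3 + 9 / t ^ 5.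
Proof.
  intros Ht.
  assert (Hi : forall b, is_RInt (fun u => exp (-(t * u)) * inv_sqrt_majorant u) 0 b
             (inv_sqrt_majorant_prim t 0 * exp (-(t * 0)) - inv_sqrt_majorant_prim t b * exp (-(t * b)))).
  { intros b.
    replace (inv_sqrt_majorant_prim t 0 * exp (-(t * 0)) - inv_sqrt_majorant_prim t b * exp (-(t * b)))
      with (- exp (-(t * b)) * inv_sqrt_majorant_prim t b - - exp (-(t * 0)) * inv_sqrt_majorant_prim t 0)
      by ring.
    apply (is_RInt_of_antiderivative (fun u => - exp (-(t * u)) * inv_sqrt_majorant_prim t u)).
    - intros x. unfold inv_sqrt_majorant_prim, inv_sqrt_majorant. auto_derive; [auto|field; lra].
    - intros x. apply continuous_of_ex_derive. unfold inv_sqrt_majorant. auto_derive. auto. }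
  apply (is_RInt_pinfty_ub (M_integrand t) 0 _ 0); [|apply is_RInt_pinfty_M; lra].
  intros b Hb.
  apply Rle_trans with (RInt (fun u => exp (-(t * u)) * inv_sqrt_majorant u) 0 b).
  - apply RInt_le; [lra|apply ex_RInt_of_continuous, continuous_M_integrand|eexists; apply Hi|].
    intros u Hu. unfold M_integrand. unfold Rdiv at 1. rewrite <- (Rmult_1_l (/ sqrt _)).
    apply Rmult_le_compat_l; [apply Rlt_le, exp_pos|apply inv_sqrt_le_majorant].
  - rewrite (is_RInt_unique _ _ _ _ (Hi b)), Rmult_0_r, Ropp_0, exp_0.
    assert (0 <= inv_sqrt_majorant_prim t b * exp (-(t * b)))
      by (apply Rmult_le_pos; [apply inv_sqrt_majorant_prim_nonneg; lra|apply Rlt_le, exp_pos]).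
    replace (inv_sqrt_majorant_prim t 0) with (1 / t - 1 / t ^ 3 + 9 / t ^ 5)
      by (unfold inv_sqrt_majorant_prim, inv_sqrt_majorant; field; lra).
    lra.
Qed.

Theorem M_lt_arccot_ge_4 t : 4 <= t -> M t < arccot t.
Proof.
  intros Ht. rewrite arccot_eq_atan_inv by lra.
  pose proof (M_le_asymptotic t Ht).
  assert (Hy : 0 < / t <= / 4) by (split; [apply Rinv_0_lt_compat|apply Rinv_le_contravar]; lra).
  pose proof (atan_taylor_odd_le_atan 1 (/ t) ltac:(lra)) as Hatan.
  unfold atan_taylor in Hatan. simpl in Hatan.
  replace (1 / t - 1 / t ^ 3 + 9 / t ^ 5) with (/ t - (/ t) ^ 3 + 9 * (/ t) ^ 5) in H by (field; lra).
  set (y := / t) in *. clearbody y.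
  enough (y - y ^ 3 + 9 * y ^ 5 < y - y ^ 3 / 3 + y ^ 5 / 5 - y ^ 7 / 7) by lra.
  assert (0 < y ^ 3) by (apply pow_lt; lra).
  assert (y ^ 2 <= / 16) by nra. assert (y ^ 4 <= / 256) by nra.
  assert (0 < y ^ 3 * (2 / 3 - 44 / 5 * y ^ 2 - y ^ 4 / 7)) by (apply Rmult_lt_0_compat; lra).
  nra.
Qed.

(** * Numerical upper bounds for M *)

Lemma inv_sqrt_le_chord a b u p q : 0 <= a -> a <= u <= b -> a < b -> 0 <= p -> 0 <= q ->
  1 <= p ^ 2 * (1 + a ^ 2) -> 1 <= q ^ 2 * (1 + b ^ 2) ->
  1 / sqrt (u ^ 2 + 1) <= p + (u ^ 2 - a ^ 2) * (q - p) / (b ^ 2 - a ^ 2).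
Proof.
  intros Ha Hu Hab Hp Hq Hpa Hqb.
  pose proof (sqrt_sqr_plus_1_pos a) as Hsa. pose proof (sqrt_sqr_plus_1_sqr a) as Esa.
  pose proof (sqrt_sqr_plus_1_pos b) as Hsb. pose proof (sqrt_sqr_plus_1_sqr b) as Esb.
  pose proof (sqrt_sqr_plus_1_pos u) as Hs. pose proof (sqrt_sqr_plus_1_sqr u) as Es.
  assert (Hsas : sqrt (a ^ 2 + 1) <= sqrt (u ^ 2 + 1)) by (apply sqrt_le_1_alt; nra).
  assert (Hssb : sqrt (u ^ 2 + 1) <= sqrt (b ^ 2 + 1)) by (apply sqrt_le_1_alt; nra).
  assert (Hd : sqrt (a ^ 2 + 1) < sqrt (b ^ 2 + 1)) by (apply sqrt_lt_1_alt; nra).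
  set (sa := sqrt (a ^ 2 + 1)) in *. set (sb := sqrt (b ^ 2 + 1)) in *. set (s := sqrt (u ^ 2 + 1)) in *.
  assert (Hp1 : 1 / sa <= p).
  { apply Rle_div_l; [lra|]. apply one_le_of_one_le_sqr; [nra|].
    replace ((p * sa) ^ 2) with (p ^ 2 * sa ^ 2) by ring. rewrite Esa. lra. }
  assert (Hq1 : 1 / sb <= q).
  { apply Rle_div_l; [lra|]. apply one_le_of_one_le_sqr; [nra|].
    replace ((q * sb) ^ 2) with (q ^ 2 * sb ^ 2) by ring. rewrite Esb. lra. }
  set (lam := (s ^ 2 - sa ^ 2) / (sb ^ 2 - sa ^ 2)).
  assert (Hl0 : 0 <= lam) by (apply Rle_mult_inv_pos; nra).
  assert (Hl1 : lam <= 1) by (apply Rle_div_l; nra).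
  replace (p + (u ^ 2 - a ^ 2) * (q - p) / (b ^ 2 - a ^ 2)) with ((1 - lam) * p + lam * q)
    by (unfold lam; rewrite Esa, Esb, Es; field; nra).
  apply Rle_trans with ((1 - lam) * (1 / sa) + lam * (1 / sb));
    [|apply Rplus_le_compat; apply Rmult_le_compat_l; lra].
  (* convexity of [w |-> 1 / sqrt w] between [sa ^ 2] and [sb ^ 2] *)
  assert (Hid : (1 - lam) * (1 / sa) + lam * (1 / sb) - 1 / s
              = (s - sa) * (sb - s) * (s + sa + sb) / (s * sa * sb * (sb + sa)))
    by (unfold lam; field; repeat split; nra).
  assert (0 <= (s - sa) * (sb - s) * (s + sa + sb) / (s * sa * sb * (sb + sa))).
  { apply Rle_mult_inv_pos; [apply Rmult_le_pos; [apply Rmult_le_pos|]; lra|].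
    repeat apply Rmult_lt_0_compat; lra. }
  lra.
Qed.

Definition quad_exp_prim (t al be u : R) : R := (al + be * u ^ 2) / t + be * (2 * u / t ^ 2 + 2 / t ^ 3).

Lemma is_RInt_quad_exp t al be a b : 0 < t ->
  is_RInt (fun u => exp (-(t * u)) * (al + be * u ^ 2)) a b
    (quad_exp_prim t al be a * exp (-(t * a)) - quad_exp_prim t al be b * exp (-(t * b))).
Proof.
  intros Ht.
  replace (quad_exp_prim t al be a * exp (-(t * a)) - quad_exp_prim t al be b * exp (-(t * b)))
    with (- exp (-(t * b)) * quad_exp_prim t al be b - - exp (-(t * a)) * quad_exp_prim t al be a) by ring.
  apply (is_RInt_of_antiderivative (fun u => - exp (-(t * u)) * quad_exp_prim t al be u)).
  - intros x. unfold quad_exp_prim. auto_derive; [auto|field; lra].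
  - intros x. apply continuous_of_ex_derive. auto_derive. auto.
Qed.

(* Knots are given in the variable [v = t u], so that the factors [exp (- v)] do not depend on [t]. *)
Definition chord_slope (t v v' p q : R) : R := (q - p) / ((v' / t) ^ 2 - (v / t) ^ 2).
Definition chord_offset (t v v' p q : R) : R := p - chord_slope t v v' p q * (v / t) ^ 2.
Definition chord_piece (t v v' p q : R) : R :=
  quad_exp_prim t (chord_offset t v v' p q) (chord_slope t v v' p q) (v / t) * exp (- v)
  - quad_exp_prim t (chord_offset t v v' p q) (chord_slope t v v' p q) (v' / t) * exp (- v').

Lemma RInt_M_integrand_le_chord_piece t v v' p q : 0 < t -> 0 <= v < v' -> 0 <= p -> 0 <= q ->
  1 <= p ^ 2 * (1 + (v / t) ^ 2) -> 1 <= q ^ 2 * (1 + (v' / t) ^ 2) ->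
  RInt (M_integrand t) (v / t) (v' / t) <= chord_piece t v v' p q.
Proof.
  intros Ht Hv Hp Hq Hpa Hqb.
  assert (Ha : 0 <= v / t) by (apply Rle_mult_inv_pos; lra).
  assert (Hab : v / t < v' / t) by (apply Rmult_lt_compat_r; [apply Rinv_0_lt_compat|]; lra).
  set (be := chord_slope t v v' p q). set (al := chord_offset t v v' p q).
  pose proof (is_RInt_quad_exp t al be (v / t) (v' / t) Ht) as Hi.
  replace (chord_piece t v v' p q) with
    (quad_exp_prim t al be (v / t) * exp (-(t * (v / t)))
     - quad_exp_prim t al be (v' / t) * exp (-(t * (v' / t))))
    by (unfold chord_piece; fold be al; do 2 f_equal; [do 2 f_equal|do 3 f_equal]; field; lra).
  rewrite <- (is_RInt_unique _ _ _ _ Hi).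
  apply RInt_le; [lra|apply ex_RInt_of_continuous, continuous_M_integrand|eexists; exact Hi|].
  intros u Hu. unfold M_integrand. unfold Rdiv at 1. rewrite <- (Rmult_1_l (/ sqrt _)).
  apply Rmult_le_compat_l; [apply Rlt_le, exp_pos|].
  replace (al + be * u ^ 2) with (p + (u ^ 2 - (v / t) ^ 2) * (q - p) / ((v' / t) ^ 2 - (v / t) ^ 2))
    by (unfold al, be, chord_offset, chord_slope; field; nra).
  apply inv_sqrt_le_chord; lra.
Qed.

Fixpoint chord_chain_ok (t v p : R) (l : list (R * R)) : Prop :=
  match l with
  | [] => True
  | (v', q) :: l' => v < v' /\ 0 <= q /\ 1 <= q ^ 2 * (1 + (v' / t) ^ 2) /\ chord_chain_ok t v' q l'
  end.

Fixpoint chord_chain_sum (t v p : R) (l : list (R * R)) : R :=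
  match l with
  | [] => 0
  | (v', q) :: l' => chord_piece t v v' p q + chord_chain_sum t v' q l'
  end.

Fixpoint chain_end (v : R) (l : list (R * R)) : R :=
  match l with
  | [] => v
  | (v', _) :: l' => chain_end v' l'
  end.

Lemma RInt_M_integrand_le_chord_chain t l : forall v p, 0 < t -> 0 <= v -> 0 <= p ->
  1 <= p ^ 2 * (1 + (v / t) ^ 2) -> chord_chain_ok t v p l ->
  RInt (M_integrand t) (v / t) (chain_end v l / t) <= chord_chain_sum t v p l.
Proof.
  induction l as [|[v' q] l IH]; intros v p Ht Hv Hp Hpa Hok; simpl in *.
  - rewrite RInt_point. apply Rle_refl.
  - destruct Hok as [Hvv [Hq [Hqb Hok]]].
    rewrite <- (RInt_Chasles (M_integrand t) (v / t) (v' / t))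
      by (apply ex_RInt_of_continuous, continuous_M_integrand).
    apply Rplus_le_compat; [apply RInt_M_integrand_le_chord_piece|apply IH]; auto; lra.
Qed.

Lemma RInt_M_integrand_tail_le t K b : 0 < t -> 0 < K -> K <= b ->
  RInt (M_integrand t) K b <= exp (-(t * K)) / (t * K).
Proof.
  intros Ht HK Hb. pose proof (is_RInt_exp_lin t K b ltac:(lra)) as Hexp.
  apply Rle_trans with (RInt (fun u => / K * exp (-(t * u))) K b).
  - apply RInt_le; [lra|apply ex_RInt_of_continuous, continuous_M_integrand| |].
    + apply (ex_RInt_scal (fun u => exp (-(t * u)))). eexists; exact Hexp.
    + intros u Hu. unfold M_integrand, Rdiv. rewrite Rmult_comm.
      apply Rmult_le_compat_r; [apply Rlt_le, exp_pos|].
      apply Rinv_le_contravar; [lra|]. apply Rle_trans with u; [lra|].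
      rewrite <- (sqrt_pow2 u) at 1 by lra. apply sqrt_le_1_alt. lra.
  - rewrite (RInt_scal (fun u => exp (-(t * u)))) by (eexists; exact Hexp).
    rewrite (is_RInt_unique _ _ _ _ Hexp).
    pose proof (exp_pos (-(t * b))).
    replace (exp (-(t * K)) / (t * K)) with (/ K * (exp (-(t * K)) / t)) by (field; lra).
    apply Rmult_le_compat_l; [left; now apply Rinv_0_lt_compat|].
    apply Rmult_le_compat_r; [left; now apply Rinv_0_lt_compat|lra].
Qed.

Lemma M_le_of_chord_chain t l U : 0 < t -> chord_chain_ok t 0 1 l -> 0 < chain_end 0 l ->
  chord_chain_sum t 0 1 l + exp (- chain_end 0 l) / chain_end 0 l <= U -> M t <= U.
Proof.
  intros Ht Hok Hend HU.
  set (K := chain_end 0 l / t) in *.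
  assert (HK : 0 < K) by (apply Rdiv_lt_0_compat; lra).
  pose proof (RInt_M_integrand_le_chord_chain t l 0 1 Ht ltac:(lra) ltac:(lra)
                ltac:(unfold Rdiv; rewrite Rmult_0_l; lra) Hok) as Hchain.
  fold K in Hchain. replace (0 / t) with 0 in Hchain by (field; lra).
  apply (is_RInt_pinfty_ub (M_integrand t) 0 _ 0); [|now apply is_RInt_pinfty_M].
  intros b Hb.
  apply Rle_trans with (RInt (M_integrand t) 0 (Rmax b K)).
  { apply RInt_le_extend; [split; [lra|apply Rmax_l]|apply continuous_M_integrand|].
    intros; left; apply M_integrand_pos. }
  rewrite <- (RInt_Chasles (M_integrand t) 0 K) by (apply ex_RInt_of_continuous, continuous_M_integrand).
  pose proof (RInt_M_integrand_tail_le t K (Rmax b K) Ht HK (Rmax_r b K)) as Htail.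
  replace (t * K) with (chain_end 0 l) in Htail by (unfold K; field; lra).
  change (plus ?x ?y) with (x + y). lra.
Qed.

Definition exp_quarter_ub : R := 7788008 / 10000000.

Lemma exp_neg_quarter_le : exp (-(1 / 4)) <= exp_quarter_ub.
Proof.
  pose proof (exp_ge_taylor (1 / 4) 6 ltac:(lra)) as H. simpl in H.
  rewrite exp_Ropp. pose proof (exp_pos (1 / 4)). unfold exp_quarter_ub.
  apply (Rmult_le_reg_r (exp (1 / 4))); [lra|]. rewrite Rinv_l by lra. lra.
Qed.

Lemma exp_neg_quarters_le k x : x = INR k / 4 -> exp (- x) <= exp_quarter_ub ^ k.
Proof.
  intros ->. induction k as [|k IH].
  - simpl. rewrite Rdiv_0_l, Ropp_0, exp_0. lra.
  - replace (- (INR (S k) / 4)) with (- (INR k / 4) + -(1 / 4)) by (rewrite S_INR; field).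
    rewrite exp_plus, Rmult_comm. simpl.
    apply Rmult_le_compat; [apply Rlt_le, exp_pos|apply Rlt_le, exp_pos|apply exp_neg_quarter_le|exact IH].
Qed.

Definition chord_knots : list R := [1/2; 3/4; 5/4; 7/4; 5/2; 7/2; 9/2; 11/2; 7; 10].

Ltac exp_knot_bounds :=
  pose proof (exp_neg_quarters_le 2 (1/2) ltac:(simpl; lra));
  pose proof (exp_neg_quarters_le 3 (3/4) ltac:(simpl; lra));
  pose proof (exp_neg_quarters_le 5 (5/4) ltac:(simpl; lra));
  pose proof (exp_neg_quarters_le 7 (7/4) ltac:(simpl; lra));
  pose proof (exp_neg_quarters_le 10 (5/2) ltac:(simpl; lra));
  pose proof (exp_neg_quarters_le 14 (7/2) ltac:(simpl; lra));
  pose proof (exp_neg_quarters_le 18 (9/2) ltac:(simpl; lra));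
  pose proof (exp_neg_quarters_le 22 (11/2) ltac:(simpl; lra));
  pose proof (exp_neg_quarters_le 28 7 ltac:(simpl; lra));
  pose proof (exp_neg_quarters_le 40 10 ltac:(simpl; lra));
  pose proof (exp_pos (-10)).

(* [qs] lists, for each knot [v] of [chord_knots], an upper bound of [1 / sqrt (1 + (v / t) ^ 2)]. *)
Ltac check_chord_certificate qs :=
  apply (M_le_of_chord_chain _ (combine chord_knots qs)); simpl; [lra|repeat split; lra|lra|];
  exp_knot_bounds;
  unfold chord_piece, quad_exp_prim, chord_offset, chord_slope, exp_quarter_ub in *;
  rewrite Ropp_0, exp_0; lra.

Lemma M_9_10_le : M (9/10) <= 819573/1000000.
Proof.
  check_chord_certificate
    [8741573/10000000; 7682213/10000000; 730381/1250000; 4573481/10000000; 677439/2000000;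
     2490411/10000000; 980581/5000000; 807443/5000000; 637609/5000000; 896377/10000000].
Qed.

Lemma M_11_10_le : M (11/10) <= 708619/1000000.
Proof.
  check_chord_certificate
    [1820733/2000000; 4131137/5000000; 6606279/10000000; 1330429/2500000; 4027387/10000000;
     1499133/5000000; 2374531/10000000; 980581/5000000; 1552379/10000000; 218681/2000000].
Qed.

Lemma M_13_10_le : M (13/10) <= 31229/50000.
Proof.
  check_chord_certificate
    [9333457/10000000; 270683/312500; 7208331/10000000; 5963241/10000000; 576691/1250000;
     1740933/5000000; 2775397/10000000; 460051/2000000; 912961/5000000; 1289153/10000000].
Qed.

Lemma M_3_2_le : M (3/2) <= 279239/500000.
Proof.
  check_chord_certificate
    [9486833/10000000; 559017/625000; 7682213/10000000; 3253957/5000000; 2572479/5000000;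
     3939193/10000000; 1581139/5000000; 105247/400000; 2095291/10000000; 296681/2000000].
Qed.

Lemma M_9_5_le : M (9/5) <= 481933/1000000.
Proof.
  check_chord_certificate
    [481759/500000; 923077/1000000; 82137/100000; 143399/200000; 730381/1250000;
     4573481/10000000; 3713907/10000000; 3110391/10000000; 2490411/10000000; 177153/1000000].
Qed.

Lemma M_21_10_le : M (21/10) <= 423717/1000000.
Proof.
  check_chord_certificate
    [9728063/10000000; 470871/500000; 8592929/10000000; 7682213/10000000; 6431921/10000000;
     2572479/5000000; 845771/2000000; 445877/1250000; 2873479/10000000; 2055173/10000000].
Qed.

Lemma M_5_2_le : M (5/2) <= 182371/500000.
Proof.
  check_chord_certificate
    [9805807/10000000; 9578263/10000000; 559017/625000; 25601/31250; 1767767/2500000;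
     2906191/5000000; 485643/1000000; 413803/1000000; 840841/2500000; 2425357/10000000].
Qed.

Lemma M_3_le : M 3 <= 19403/62500.
Proof.
  check_chord_certificate
    [493197/500000; 4850713/5000000; 923077/1000000; 863779/1000000; 7682213/10000000;
     3253957/5000000; 2773501/5000000; 2394261/5000000; 3939193/10000000; 2873479/10000000].
Qed.

Lemma M_7_2_le : M (7/2) <= 54007/200000.
Proof.
  check_chord_certificate
    [1979899/2000000; 391121/400000; 470871/500000; 559017/625000; 1627467/2000000;
     1767767/2500000; 6139407/10000000; 1073751/2000000; 559017/1250000; 660701/2000000].
Qed.

Lemma M_4_le : M 4 <= 119401/500000.
Proof.
  check_chord_certificate
    [9922779/10000000; 4914361/5000000; 11931/12500; 4580787/5000000; 529999/625000;
     7525767/10000000; 6643639/10000000; 5881717/10000000; 496139/1000000; 3713907/10000000].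
Qed.

Lemma M_lt_arccot_between t1 t2 U1 U2 m A : 0 < t1 < t2 -> 0 < m ->
  M t1 <= U1 -> M t2 <= U2 -> A <= arccot m ->
  U1 < A - (t1 - m) / (1 + m ^ 2) -> U2 < A - (t2 - m) / (1 + m ^ 2) ->
  forall t, t1 <= t <= t2 -> M t < arccot t.
Proof.
  intros Ht12 Hm HU1 HU2 HA H1 H2 t Ht.
  set (l := (t2 - t) / (t2 - t1)).
  assert (Hl : 0 <= l <= 1) by (split; [apply Rle_mult_inv_pos|apply Rle_div_l]; lra).
  assert (Htl : t = l * t1 + (1 - l) * t2) by (unfold l; field; lra).
  pose proof (M_convex t1 t2 l ltac:(lra) ltac:(lra) Hl) as Hconv. rewrite <- Htl in Hconv.
  pose proof (arccot_ge_tangent m t Hm ltac:(lra)) as Htan.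
  assert (Hlin : (t - m) / (1 + m ^ 2) = l * ((t1 - m) / (1 + m ^ 2)) + (1 - l) * ((t2 - m) / (1 + m ^ 2)))
    by (rewrite Htl; field; nra).
  assert (l * M t1 <= l * U1) by (apply Rmult_le_compat_l; lra).
  assert ((1 - l) * M t2 <= (1 - l) * U2) by (apply Rmult_le_compat_l; lra).
  assert (l * U1 + (1 - l) * U2 < l * (A - (t1 - m) / (1 + m ^ 2)) + (1 - l) * (A - (t2 - m) / (1 + m ^ 2))).
  { destruct (Req_dec l 0) as [->|Hl0]; [lra|].
    assert (l * U1 < l * (A - (t1 - m) / (1 + m ^ 2))) by (apply Rmult_lt_compat_l; lra).
    assert ((1 - l) * U2 <= (1 - l) * (A - (t2 - m) / (1 + m ^ 2))) by (apply Rmult_le_compat_l; lra).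
    lra. }
  lra.
Qed.

Lemma arccot_ge_atan_taylor m : 0 < m -> atan_taylor (S (2 * 3)) (/ m) <= arccot m.
Proof.
  intros Hm. rewrite arccot_eq_atan_inv by exact Hm.
  apply atan_taylor_odd_le_atan. left. now apply Rinv_0_lt_compat.
Qed.

Lemma arccot_1_ge : atan_taylor (S (2 * 3)) (/ 2) + atan_taylor (S (2 * 3)) (/ 3) <= arccot 1.
Proof.
  rewrite arccot_1.
  pose proof (atan_taylor_odd_le_atan 3 (/ 2) ltac:(lra)).
  pose proof (atan_taylor_odd_le_atan 3 (/ 3) ltac:(lra)). lra.
Qed.

Ltac atan_numeric := unfold atan_taylor; simpl; lra.

Theorem M_lt_arccot t : 9/10 <= t -> M t < arccot t.
Proof.
  intros Ht.
  destruct (Rle_lt_dec t (11/10)).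
  { apply (M_lt_arccot_between (9/10) (11/10) _ _ 1 _ ltac:(lra) ltac:(lra) M_9_10_le M_11_10_le arccot_1_ge);
      [atan_numeric|atan_numeric|lra]. }
  destruct (Rle_lt_dec t (13/10)).
  { apply (M_lt_arccot_between (11/10) (13/10) _ _ 1 _ ltac:(lra) ltac:(lra) M_11_10_le M_13_10_le arccot_1_ge);
      [atan_numeric|atan_numeric|lra]. }
  destruct (Rle_lt_dec t (3/2)).
  { apply (M_lt_arccot_between (13/10) (3/2) _ _ (6/5) _ ltac:(lra) ltac:(lra) M_13_10_le M_3_2_le
             (arccot_ge_atan_taylor (6/5) ltac:(lra))); [atan_numeric|atan_numeric|lra]. }
  destruct (Rle_lt_dec t (9/5)).
  { apply (M_lt_arccot_between (3/2) (9/5) _ _ (8/5) _ ltac:(lra) ltac:(lra) M_3_2_le M_9_5_le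
             (arccot_ge_atan_taylor (8/5) ltac:(lra))); [atan_numeric|atan_numeric|lra]. }
  destruct (Rle_lt_dec t (21/10)).
  { apply (M_lt_arccot_between (9/5) (21/10) _ _ 2 _ ltac:(lra) ltac:(lra) M_9_5_le M_21_10_le
             (arccot_ge_atan_taylor 2 ltac:(lra))); [atan_numeric|atan_numeric|lra]. }
  destruct (Rle_lt_dec t (5/2)).
  { apply (M_lt_arccot_between (21/10) (5/2) _ _ (23/10) _ ltac:(lra) ltac:(lra) M_21_10_le M_5_2_le
             (arccot_ge_atan_taylor (23/10) ltac:(lra))); [atan_numeric|atan_numeric|lra]. }
  destruct (Rle_lt_dec t 3).
  { apply (M_lt_arccot_between (5/2) 3 _ _ (11/4) _ ltac:(lra) ltac:(lra) M_5_2_le M_3_le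
             (arccot_ge_atan_taylor (11/4) ltac:(lra))); [atan_numeric|atan_numeric|lra]. }
  destruct (Rle_lt_dec t (7/2)).
  { apply (M_lt_arccot_between 3 (7/2) _ _ (13/4) _ ltac:(lra) ltac:(lra) M_3_le M_7_2_le
             (arccot_ge_atan_taylor (13/4) ltac:(lra))); [atan_numeric|atan_numeric|lra]. }
  destruct (Rle_lt_dec t 4).
  { apply (M_lt_arccot_between (7/2) 4 _ _ (15/4) _ ltac:(lra) ltac:(lra) M_7_2_le M_4_le
             (arccot_ge_atan_taylor (15/4) ltac:(lra))); [atan_numeric|atan_numeric|lra]. }
  apply M_lt_arccot_ge_4. lra.
Qed.

(** * The sine integral *)

Lemma sin_ge_cubic a : 0 <= a <= 4 -> a - a ^ 3 / 6 <= sin a.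
Proof.
  intros Ha. destruct (pre_sin_bound a 0 (proj1 Ha) (proj2 Ha)) as [H _].
  unfold sin_approx, sin_term in H. simpl in H. lra.
Qed.

Lemma sin_le_id a : 0 <= a -> sin a <= a.
Proof. intros [H|<-]; [left; now apply sin_lt_x|rewrite sin_0; lra]. Qed.

Lemma sin_div_sub_1_abs_le y : y <> 0 -> Rabs y <= 1 -> Rabs (sin y / y - 1) <= y ^ 2 / 6.
Proof.
  intros Hy Hy1.
  replace (sin y / y) with (sin (Rabs y) / Rabs y)
    by (destruct (Rle_lt_dec 0 y); [rewrite Rabs_pos_eq by lra|rewrite Rabs_left, sin_neg by lra; field]; auto).
  rewrite <- pow2_abs. pose proof (Rabs_pos_lt y Hy) as Ha. set (a := Rabs y) in *. clearbody a.
  pose proof (sin_ge_cubic a ltac:(lra)). pose proof (sin_le_id a ltac:(lra)).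
  apply Rabs_le. split.
  - replace (- (a ^ 2 / 6)) with ((a - a ^ 3 / 6) / a - 1) by (field; lra).
    apply Rplus_le_compat_r, Rmult_le_compat_r; [left; now apply Rinv_0_lt_compat|lra].
  - assert (sin a / a <= 1) by (apply Rle_div_l; lra). nra.
Qed.

(* [sin u / u] extended by continuity at [0] (where Rocq's division gives the junk value [0]). *)
Definition sinc (u : R) : R := if Req_EM_T u 0 then 1 else sin u / u.

Lemma continuous_sinc x : continuous sinc x.
Proof.
  destruct (Req_EM_T x 0) as [->|Hx].
  - apply continuity_pt_filterlim. intros eps Heps.
    exists (Rmin 1 eps). split; [apply Rmin_pos; lra|].
    intros y [_ Hy]. simpl in Hy. unfold R_dist in Hy. rewrite Rminus_0_r in Hy.
    pose proof (Rmin_l 1 eps). pose proof (Rmin_r 1 eps).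
    unfold sinc. destruct (Req_EM_T 0 0) as [_|]; [|lra].
    destruct (Req_EM_T y 0) as [->|Hy0]; [simpl; rewrite R_dist_eq; lra|].
    simpl. unfold R_dist. eapply Rle_lt_trans; [apply sin_div_sub_1_abs_le; auto; lra|].
    rewrite <- pow2_abs. pose proof (Rabs_pos y). nra.
  - apply (continuous_ext_loc _ (fun y => sin y / y)).
    + exists (mkposreal _ (Rabs_pos_lt x Hx)). intros y Hy. unfold sinc.
      destruct (Req_EM_T y 0) as [->|]; [|reflexivity].
      exfalso. apply (Rlt_irrefl (Rabs x)). change (Rabs (0 - x) < Rabs x) in Hy.
      now rewrite Rminus_0_l, Rabs_Ropp in Hy.
    + apply continuous_of_ex_derive. auto_derive. exact Hx.
Qed.

Lemma ex_RInt_sin_div b : 0 <= b -> ex_RInt (fun u => sin u / u) 0 b.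
Proof.
  intros Hb. apply (ex_RInt_ext sinc); [|apply ex_RInt_of_continuous, continuous_sinc].
  intros x Hx. rewrite Rmin_left, Rmax_right in Hx by lra.
  unfold sinc. destruct (Req_EM_T x 0); [lra|reflexivity].
Qed.

Definition dirichlet_integral : R := int_to_infty (fun u => sin u / u) 0.

Lemma dirichlet_integral_split t : 0 < t ->
  dirichlet_integral = RInt (fun u => sin u / u) 0 t + sine_tail t.
Proof.
  intros Ht. apply int_to_infty_eq, is_RInt_pinfty_Chasles; [lra|intros; now apply ex_RInt_sin_div|].
  now apply is_RInt_pinfty_sin_div_id.
Qed.

Lemma sine_tail_nonneg t : 0 < t <= PI / 2 -> 0 <= sine_tail t.
Proof.
  intros Ht. unfold sine_tail.
  pose proof (aux_f_bounds t ltac:(lra)). pose proof (aux_g_bounds t ltac:(lra)).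
  assert (0 <= sin t) by (apply sin_ge_0; lra). assert (0 <= cos t) by (apply cos_ge_0; lra).
  apply Rplus_le_le_0_compat; apply Rmult_le_pos; lra.
Qed.

Lemma RInt_sin_div_bounds t : 0 <= t <= 1 -> t - t ^ 3 / 18 <= RInt (fun u => sin u / u) 0 t <= t.
Proof.
  intros Ht.
  assert (Hi1 : is_RInt (fun u => 1 - u ^ 2 / 6) 0 t (t - t ^ 3 / 18)).
  { replace (t - t ^ 3 / 18) with ((t - t ^ 3 / 18) - (0 - 0 ^ 3 / 18)) by field.
    apply (is_RInt_of_antiderivative (fun u => u - u ^ 3 / 18)).
    - intros x. auto_derive; [auto|field].
    - intros x. apply continuous_of_ex_derive. auto_derive. auto. }
  assert (Hi2 : is_RInt (fun _ => 1) 0 t t).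
  { replace t with (t - 0) at 2 by ring.
    apply (is_RInt_of_antiderivative (fun u => u));
      [intros; auto_derive; auto|intros; apply continuous_const]. }
  split.
  - rewrite <- (is_RInt_unique _ _ _ _ Hi1).
    apply RInt_le; [lra|eexists; exact Hi1|apply ex_RInt_sin_div; lra|].
    intros u Hu. pose proof (sin_ge_cubic u ltac:(lra)).
    apply Rle_div_r; [lra|]. replace ((1 - u ^ 2 / 6) * u) with (u - u ^ 3 / 6) by field. lra.
  - rewrite <- (is_RInt_unique _ _ _ _ Hi2) at 2.
    apply RInt_le; [lra|apply ex_RInt_sin_div; lra|eexists; exact Hi2|].
    intros u Hu. pose proof (sin_le_id u ltac:(lra)). apply Rle_div_l; lra.
Qed.

Lemma aux_f_le_PI2 t : 0 < t -> aux_f t <= PI / 2.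
Proof.
  intros Ht.
  assert (Hi : forall b, is_RInt kernel_f 0 b (atan b - atan 0)).
  { intros b. apply is_RInt_of_antiderivative; [|apply continuous_kernel_f].
    intros x. unfold kernel_f. replace (1 / (1 + x ^ 2)) with (/ (1 + x²)) by (unfold Rsqr; field; nra).
    apply is_derive_atan. }
  apply (is_RInt_pinfty_ub (fun x => exp (-(t * x)) * kernel_f x) 0 _ 0); [|now apply is_RInt_pinfty_aux_f].
  intros b Hb. apply Rle_trans with (RInt kernel_f 0 b).
  - apply RInt_le; [lra| |eexists; apply Hi|].
    + apply ex_RInt_of_continuous. intros x.
      apply (continuous_mult (fun x => exp (-(t * x))) kernel_f); [|apply continuous_kernel_f].
      apply continuous_of_ex_derive. auto_derive. auto.
    + intros x Hx. destruct (kernel_f_bounds x ltac:(lra)).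
      assert (exp (-(t * x)) <= 1) by (rewrite <- exp_0; apply exp_le_exp_of_le; nra).
      rewrite <- (Rmult_1_l (kernel_f x)) at 2. apply Rmult_le_compat_r; lra.
  - rewrite (is_RInt_unique _ _ _ _ (Hi b)), atan_0. pose proof (atan_bound b). lra.
Qed.

Lemma aux_g_le t e : 0 < t -> 0 < e -> aux_g t <= e / t + aux_f t / (4 * e).
Proof.
  intros Ht He.
  replace (e / t + aux_f t / (4 * e)) with (e * (1 / t) + / (4 * e) * aux_f t) by (field; lra).
  apply (is_RInt_pinfty_le (fun x => exp (-(t * x)) * kernel_g x)
           (fun x => e * exp (-(t * x)) + / (4 * e) * (exp (-(t * x)) * kernel_f x)) 0).
  - intros x Hx. pose proof (exp_pos (-(t * x))).
    replace (e * exp (-(t * x)) + / (4 * e) * (exp (-(t * x)) * kernel_f x))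
      with (exp (-(t * x)) * (e + kernel_f x / (4 * e))) by (field; lra).
    apply Rmult_le_compat_l; [lra|]. unfold kernel_f, kernel_g.
    apply Rle_div_l; [nra|].
    replace ((e + 1 / (1 + x ^ 2) / (4 * e)) * (1 + x ^ 2)) with (e * (1 + x ^ 2) + 1 / (4 * e))
      by (field; split; nra).
    (* AM-GM: [x <= e x^2 + 1 / (4 e)] *)
    assert (0 <= (2 * e * x - 1) ^ 2 / (4 * e)) by (apply Rle_mult_inv_pos; [apply pow2_ge_0|lra]).
    replace ((2 * e * x - 1) ^ 2 / (4 * e)) with (e * x ^ 2 - x + 1 / (4 * e)) in H0 by (field; lra).
    lra.
  - now apply is_RInt_pinfty_aux_g.
  - apply is_RInt_pinfty_plus; apply is_RInt_pinfty_scal;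
      [apply is_RInt_pinfty_exp|apply is_RInt_pinfty_aux_f]; lra.
Qed.

Lemma dirichlet_integral_le_PI2_plus e : 0 < e <= 1 -> dirichlet_integral <= PI / 2 + 3 * e.
Proof.
  intros He. set (d := e ^ 2). assert (Hd : 0 < d <= e) by (unfold d; split; nra).
  rewrite (dirichlet_integral_split d) by lra. unfold sine_tail.
  destruct (RInt_sin_div_bounds d ltac:(lra)) as [_ HR].
  destruct (aux_f_bounds d ltac:(lra)) as [Hf0 _]. destruct (aux_g_bounds d ltac:(lra)) as [Hg0 _].
  pose proof (aux_f_le_PI2 d ltac:(lra)). pose proof (aux_g_le d e ltac:(lra) ltac:(lra)). pose proof PI_4.
  assert (0 <= sin d <= d) by (split; [apply sin_ge_0|apply sin_le_id]; pose proof PI2_3_2; lra).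
  pose proof (COS_bound d).
  assert (sin d * aux_g d <= d * (e / d + aux_f d / (4 * e))) by (apply Rmult_le_compat; lra).
  replace (d * (e / d + aux_f d / (4 * e))) with (e + e * aux_f d / 4) in H4 by (unfold d; field; lra).
  assert (cos d * aux_f d <= aux_f d) by (rewrite <- (Rmult_1_l (aux_f d)) at 2; apply Rmult_le_compat_r; lra).
  assert (e * aux_f d <= 2 * e) by nra.
  lra.
Qed.

Lemma dirichlet_integral_le_PI2 : dirichlet_integral <= PI / 2.
Proof.
  apply Rle_plus_epsilon. intros eps Heps.
  pose proof (Rmin_l 1 (eps / 3)). pose proof (Rmin_r 1 (eps / 3)).
  pose proof (dirichlet_integral_le_PI2_plus (Rmin 1 (eps / 3)) ltac:(split; [apply Rmin_pos|]; lra)).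
  lra.
Qed.

Lemma dirichlet_integral_nonneg : 0 <= dirichlet_integral.
Proof.
  rewrite (dirichlet_integral_split 1) by lra.
  destruct (RInt_sin_div_bounds 1 ltac:(lra)) as [H _].
  pose proof (sine_tail_nonneg 1 ltac:(pose proof PI2_1; lra)). lra.
Qed.

Lemma Rabs_sine_tail_le_Cmod_E t : 0 < t -> Rabs (sine_tail t) <= Cmod (E t).
Proof.
  intros Ht. rewrite E_eq by exact Ht. unfold Cmod, fst, snd, sine_tail.
  rewrite <- sqrt_Rsqr_abs. apply sqrt_le_1_alt.
  pose proof (sin2_cos2 t) as H1. pose proof (pow2_ge_0 (cos t * aux_g t - sin t * aux_f t)).
  unfold Rsqr in *. nra.
Qed.

Theorem Rabs_si_le_arccot t : 0 <= t -> Rabs (si t) <= arccot t /\ (Rabs (si t) = arccot t -> t = 0).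
Proof.
  intros Ht. destruct (Req_dec t 0) as [->|Ht0].
  - split; [|reflexivity]. unfold si. fold dirichlet_integral. unfold arccot. rewrite atan_0.
    pose proof dirichlet_integral_le_PI2. pose proof dirichlet_integral_nonneg.
    rewrite Rabs_Ropp, Rabs_pos_eq by lra. lra.
  - enough (Rabs (si t) < arccot t) by lra.
    rewrite si_eq, Rabs_Ropp by lra.
    destruct (Rle_lt_dec t (9/10)) as [Hsmall|Hlarge].
    + rewrite Rabs_pos_eq by (apply sine_tail_nonneg; pose proof PI2_1; lra).
      pose proof (dirichlet_integral_split t ltac:(lra)). pose proof dirichlet_integral_le_PI2.
      destruct (RInt_sin_div_bounds t ltac:(lra)) as [HR _].
      pose proof (atan_le_atan_taylor_even 1 t ltac:(lra)) as Hatan.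
      unfold atan_taylor in Hatan. simpl in Hatan.
      assert (0 < t ^ 3 * (5 / 18 - t ^ 2 / 5)) by (apply Rmult_lt_0_compat; [apply pow_lt|]; nra).
      unfold arccot. nra.
    + pose proof (Rabs_sine_tail_le_Cmod_E t ltac:(lra)).
      pose proof (Cmod_E_lt_M t ltac:(lra)). pose proof (M_lt_arccot t ltac:(lra)). lra.
Qed.

Theorem proposition3 :
  (forall t : R, 0 < t -> Cmod (E t) < M t) /\
  (exists t0 t1 : R, 0 < t1 /\ t1 < t0 /\ t0 < 1 /\
     (forall t : R, t > t0 -> M t < arccot t) /\
     (forall t : R, t > t1 -> Cmod (E t) < arccot t)) /\
  (forall t : R, 0 <= t ->
     Rabs (si t) <= arccot t /\ (Rabs (si t) = arccot t -> t = 0)).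
Proof.
  split; [exact Cmod_E_lt_M|split; [|exact Rabs_si_le_arccot]].
  exists (95/100), (9/10). repeat split; try lra.
  - intros t Ht. apply M_lt_arccot. lra.
  - intros t Ht. apply (Rlt_trans _ (M t)); [apply Cmod_E_lt_M|apply M_lt_arccot]; lra.
Qed.
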